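(* Let $g$ satisfy (KPP$_g$) and $f$ satisfy (KPP$_f$). Then problem (H) admits a unique positive bounded steady state that does not depend on $x_1,\ldots,x_{N-1}$.
   Context: Problem (H) (two adjacent half-spaces in $\mathbb{R}^N$, $N\geq2$, $D,d,\mu,\nu>0$): $u_t-D\Delta u=g(u)$ in $\{x_N<0\}\times(0,\infty)$, $v_t-d\Delta v=f(v)$ in $\{x_N>0\}\times(0,\infty)$, $D\partial_{x_N}u=\nu v-\mu u$ and $-d\partial_{x_N}v=\mu u-\nu v$ on $\{x_N=0\}\times(0,\infty)$ ($u$ and $v$ are defined up to $\{x_N=0\}$ by continuity from their respective sides). A steady state is a time-independent solution. (KPP$_g$): $g$ locally Lipschitz, differentiable at $0$, $g(0)=g(1)=0$, $0<g(s)\leq g'(0)s$ on $(0,1)$, $g(s)<0$ for $s>1$. (KPP$_f$): for some $S>0$, $f$ locally Lipschitz, differentiable at $0$, $f(0)=f(S)=0$, $0<f(s)\leq f'(0)s$ on $(0,S)$, $f(s)<0$ for $s>S$. *)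

From Stdlib Require Import Reals.
From mathcomp Require Import ssreflect ssrfun ssrbool eqtype ssrnat fintype bigop.
Open Scope R_scope.
Set Implicit Arguments.
Unset Strict Implicit.

(* A point of R^N, N = n+1, is written (x', x_N) with x' : 'I_n -> R
   (the coordinates x_1..x_{N-1}) and x_N : R the last coordinate. *)
Definition pt (n : nat) : Type := (('I_n -> R) * R)%type.

Definition upd (n : nat) (x' : 'I_n -> R) (i : 'I_n) (t : R) : 'I_n -> R :=
  fun j => if j == i then t else x' j.

(* coordinate directions: Some i = x_{i+1} (i < n), None = x_N *)
Definition coord (n : nat) (x : pt n) (i : option 'I_n) : R :=
  match i with Some i => x.1 i | None => x.2 end.

Definition dir (n : nat) (U : pt n -> R) (x : pt n) (i : option 'I_n) : R -> R :=
  fun t => match i with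
           | Some i => U (upd x.1 i t, x.2)
           | None => U (x.1, t)
           end.

Definition second_deriv (phi : R -> R) (t0 l : R) : Prop :=
  exists (del : R) (phi1 : R -> R), 0 < del /\
    (forall t, Rabs (t - t0) < del -> derivable_pt_lim phi t (phi1 t)) /\
    derivable_pt_lim phi1 t0 l.

Definition has_laplacian (n : nat) (U : pt n -> R) (x : pt n) (L : R) : Prop :=
  exists lam : option 'I_n -> R,
    (forall i, second_deriv (dir U x i) (coord x i) (lam i)) /\
    L = \big[Rplus/0]_(i < n) lam (Some i) + lam None.

Definition cont_on (n : nat) (U : pt n -> R) (S : pt n -> Prop) : Prop :=
  forall x, S x -> forall eps, 0 < eps -> exists del, 0 < del /\
    forall z, S z -> (forall i, Rabs (z.1 i - x.1 i) < del) ->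
      Rabs (z.2 - x.2) < del -> Rabs (U z - U x) < eps.

Definition left_deriv (phi : R -> R) (t0 l : R) : Prop :=
  forall eps, 0 < eps -> exists del, 0 < del /\
    forall h, - del < h < 0 -> Rabs ((phi (t0 + h) - phi t0) / h - l) < eps.
Definition right_deriv (phi : R -> R) (t0 l : R) : Prop :=
  forall eps, 0 < eps -> exists del, 0 < del /\
    forall h, 0 < h < del -> Rabs ((phi (t0 + h) - phi t0) / h - l) < eps.

Definition lowerH (n : nat) (x : pt n) : Prop := x.2 <= 0.
Definition upperH (n : nat) (x : pt n) : Prop := 0 <= x.2.

(* Steady state of problem (H): U lives on {x_N <= 0}, V on {x_N >= 0}. *)
Definition steady_state (n : nat) (D d mu nu : R) (g f : R -> R)
    (U V : pt n -> R) : Prop :=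
  (forall x : pt n, x.2 < 0 -> exists L, has_laplacian U x L /\ - D * L = g (U x)) /\
  (forall x : pt n, 0 < x.2 -> exists L, has_laplacian V x L /\ - d * L = f (V x)) /\
  cont_on U (@lowerH n) /\ cont_on V (@upperH n) /\
  (forall x' : 'I_n -> R, exists a b : R,
      left_deriv (fun t => U (x', t)) 0 a /\
      right_deriv (fun t => V (x', t)) 0 b /\
      D * a = nu * V (x', 0) - mu * U (x', 0) /\
      - d * b = mu * U (x', 0) - nu * V (x', 0)).

Definition positive_bounded (n : nat) (U V : pt n -> R) : Prop :=
  (forall x : pt n, x.2 <= 0 -> 0 < U x) /\
  (forall x : pt n, 0 <= x.2 -> 0 < V x) /\
  (exists C, forall x : pt n, x.2 <= 0 -> Rabs (U x) <= C) /\
  (exists C, forall x : pt n, 0 <= x.2 -> Rabs (V x) <= C).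

Definition tangential_indep (n : nat) (U V : pt n -> R) : Prop :=
  (forall (x' y' : 'I_n -> R) t, t <= 0 -> U (x', t) = U (y', t)) /\
  (forall (x' y' : 'I_n -> R) t, 0 <= t -> V (x', t) = V (y', t)).

Definition loc_lipschitz (h : R -> R) : Prop :=
  forall a b, exists L, forall s t, a <= s <= b -> a <= t <= b ->
    Rabs (h s - h t) <= L * Rabs (s - t).

Definition KPP_g (g : R -> R) : Prop :=
  loc_lipschitz g /\
  exists g0, derivable_pt_lim g 0 g0 /\ g 0 = 0 /\ g 1 = 0 /\
    (forall s, 0 < s < 1 -> 0 < g s <= g0 * s) /\
    (forall s, 1 < s -> g s < 0).

Definition KPP_f (f : R -> R) : Prop :=
  exists S, 0 < S /\ loc_lipschitz f /\
  exists f0, derivable_pt_lim f 0 f0 /\ f 0 = 0 /\ f S = 0 /\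
    (forall s, 0 < s < S -> 0 < f s <= f0 * s) /\
    (forall s, S < s -> f s < 0).

(* A steady state not depending on x_1, ..., x_(N-1) is a pair of profiles
   u(x_N) = wu(- x_N), v(x_N) = wv(x_N), where wu and wv are bounded positive solutions of
   w'' = - h(w) on the half-line, with h = g/D resp. f/d, coupled at 0 by the exchange
   conditions.  For such a solution the energy w'^2/2 - P(w), with P(s) = int_s^c h and c
   the positive zero of h, is constant and must vanish, since otherwise w would grow
   linearly or be trapped on one side of c.  Hence w is monotone, solves
   w' = sign(c - a) sqrt(2 P(w)) with a = w(0), and is determined by a; conversely it is
   obtained by inverting the travel time int_a^s 1/sqrt(2 P), which diverges at c because
   h is Lipschitz.  The slope beta(a) = sign(c - a) sqrt(2 P(a)) at 0 is strictly
   decreasing in a, so the two exchange conditions determine (wu(0), wv(0)) uniquely, and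
   the intermediate value theorem provides a solution. *)

From Stdlib Require Import Reals Lra Ranalysis5.
From Coquelicot Require Import Coquelicot.
From mathcomp Require Import ssreflect ssrfun ssrbool eqtype ssrnat fintype bigop.
Open Scope R_scope.
Set Bullet Behavior "Strict Subproofs".

(** * Calculus on the real line *)

Lemma continuity_pt_cst k x : continuity_pt (fun _ => k) x.
Proof. exact: continuity_pt_const. Qed.

Lemma continuity_pt_eps f x : continuity_pt f x <->
  forall eps, 0 < eps -> exists del, 0 < del /\
    forall y, Rabs (y - x) < del -> Rabs (f y - f x) < eps.
Proof.
  split=> H eps Heps; have [del [Hdel Hf]] := H eps Heps; exists del; split=> //.
  - move=> y Hy; case: (Req_dec y x) => [->|Hxy].
    + by rewrite Rminus_diag Rabs_R0.
    + by apply: Hf; split; [split; [|apply: not_eq_sym]|].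
  - by move=> y [_ Hy]; apply: Hf.
Qed.

Lemma continuity_pt_Rmax a x : continuity_pt (Rmax a) x.
Proof.
  apply/continuity_pt_eps => eps Heps; exists eps; split=> // y.
  rewrite /Rmax; case: Rle_dec; case: Rle_dec => ? ? /Rabs_def2 ?;
    apply: Rabs_def1; lra.
Qed.

Lemma loc_lipschitz_continuity_pt f : loc_lipschitz f -> forall x, continuity_pt f x.
Proof.
  move=> Hf x; have [L HL] := Hf (x - 1) (x + 1).
  apply/continuity_pt_eps => eps Heps.
  have HL1 : 0 < Rabs L + 1 by have := Rabs_pos L; lra.
  exists (Rmin 1 (eps / (Rabs L + 1))); split.
    by apply: Rmin_pos; [lra|apply: Rdiv_lt_0_compat].
  move=> y Hy; have := Rmin_l 1 (eps / (Rabs L + 1)); have := Rmin_r 1 (eps / (Rabs L + 1)).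
  move=> Hr Hl; have /Rabs_def2 Hy' : Rabs (y - x) < 1 by lra.
  have := HL y x ltac:(lra) ltac:(lra).
  have : L * Rabs (y - x) <= Rabs L * Rabs (y - x).
    by apply: Rmult_le_compat_r; [apply: Rabs_pos|apply: Rle_abs].
  have : Rabs L * Rabs (y - x) <= Rabs L * (eps / (Rabs L + 1)).
    by apply: Rmult_le_compat_l; [apply: Rabs_pos|lra].
  have : Rabs L * (eps / (Rabs L + 1)) < eps.
    apply: (Rmult_lt_reg_r (Rabs L + 1)) => //.
    rewrite (_ : Rabs L * (eps / (Rabs L + 1)) * (Rabs L + 1) = Rabs L * eps); last by field; lra.
    nra.
  lra.
Qed.

Lemma derivable_pt_lim_continuity_pt {f x l} :
  derivable_pt_lim f x l -> continuity_pt f x.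
Proof. by move=> H; apply: derivable_continuous_pt; exists l. Qed.

Lemma derivable_pt_lim_ext_loc f g x l r : 0 < r ->
  (forall y, Rabs (y - x) < r -> f y = g y) ->
  derivable_pt_lim f x l -> derivable_pt_lim g x l.
Proof.
  move=> Hr E /is_derive_Reals H; apply/is_derive_Reals.
  by apply: (is_derive_ext_loc f) H; exists (mkposreal r Hr) => y Hy; apply: E.
Qed.

Lemma derivable_pt_lim_reflect f x l :
  derivable_pt_lim f (- x) l -> derivable_pt_lim (fun t => f (- t)) x (- l).
Proof.
  move=> /is_derive_Reals H; apply/is_derive_Reals.
  have Hopp : is_derive (fun t : R => - t) x (-1) by auto_derive; [|ring].
  have := is_derive_comp f (fun t => - t) x l (-1) H Hopp.
  by rewrite /scal /= /mult /= Rmult_comm -Ropp_mult_distr_r Rmult_1_r.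
Qed.

Lemma RInt_lower_deriv f b x : (forall y, continuity_pt f y) ->
  derivable_pt_lim (fun s => RInt f s b) x (- f x).
Proof.
  move=> Hf; apply/is_derive_Reals; apply: (is_derive_RInt' f).
  - exists (mkposreal 1 Rlt_0_1) => y _; apply: RInt_correct.
    by apply: ex_RInt_continuous => z _; apply/continuity_pt_filterlim.
  - exact/continuity_pt_filterlim.
Qed.

Lemma MVT_open f df a b : a < b ->
  (forall x, a < x < b -> derivable_pt_lim f x (df x)) ->
  (forall x, a <= x <= b -> continuity_pt f x) ->
  exists z, a < z < b /\ f b - f a = df z * (b - a).
Proof.
  move=> Hab Hd Hc.
  pose prf c (Hc : a < c < b) := exist _ (df c) (Hd c Hc) : derivable_pt f c.
  pose prid c (_ : a < c < b) := derivable_pt_id c.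
  have [|z [Hz E]] := MVT f id a b prf prid Hab Hc.
    by move=> x _; apply: derivable_continuous_pt; apply: derivable_pt_id.
  exists z; split=> //.
  rewrite (derive_pt_eq_0 _ _ (df z) (prf z Hz) (Hd z Hz)) in E.
  rewrite (derive_pt_eq_0 _ _ 1 (prid z Hz) (derivable_pt_lim_id z)) in E.
  lra.
Qed.

Section Monotonicity.
Variables (f df : R -> R) (a b : R).
Hypothesis f_deriv : forall x, a < x < b -> derivable_pt_lim f x (df x).
Hypothesis f_cont : forall x, a <= x <= b -> continuity_pt f x.

Lemma incr_of_deriv_nonneg : a <= b -> (forall x, a < x < b -> 0 <= df x) -> f a <= f b.
Proof.
  move=> Hab Hpos; have [{}Hab|<-] := Rle_lt_or_eq_dec _ _ Hab; last lra.
  have [z [Hz E]] := MVT_open f df a b Hab f_deriv f_cont; have := Hpos z Hz; nra.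
Qed.

Lemma strict_incr_of_deriv_pos : a < b -> (forall x, a < x < b -> 0 < df x) -> f a < f b.
Proof.
  move=> Hab Hpos.
  have [z [Hz E]] := MVT_open f df a b Hab f_deriv f_cont; have := Hpos z Hz; nra.
Qed.

Lemma decr_of_deriv_nonpos : a <= b -> (forall x, a < x < b -> df x <= 0) -> f b <= f a.
Proof.
  move=> Hab Hneg; have [{}Hab|<-] := Rle_lt_or_eq_dec _ _ Hab; last lra.
  have [z [Hz E]] := MVT_open f df a b Hab f_deriv f_cont; have := Hneg z Hz; nra.
Qed.

Lemma strict_decr_of_deriv_neg : a < b -> (forall x, a < x < b -> df x < 0) -> f b < f a.
Proof.
  move=> Hab Hneg.
  have [z [Hz E]] := MVT_open f df a b Hab f_deriv f_cont; have := Hneg z Hz; nra.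
Qed.
End Monotonicity.

Lemma const_of_deriv0 f : (forall t, 0 < t -> derivable_pt_lim f t 0) ->
  forall t, 0 < t -> f t = f 1.
Proof.
  move=> Hd t Ht; case: (Rtotal_order t 1) => [Hlt|[->//|Hgt]].
  - have [z [_ E]] := MVT_open f (fun _ => 0) t 1 Hlt (fun x Hx => Hd x ltac:(lra))
      (fun x Hx => derivable_pt_lim_continuity_pt (Hd x ltac:(lra))); lra.
  - have [z [_ E]] := MVT_open f (fun _ => 0) 1 t Hgt (fun x Hx => Hd x ltac:(lra))
      (fun x Hx => derivable_pt_lim_continuity_pt (Hd x ltac:(lra))); lra.
Qed.

Lemma deriv_lb_growth f df a b k :
  (forall x, a < x < b -> derivable_pt_lim f x (df x)) ->
  (forall x, a <= x <= b -> continuity_pt f x) -> a <= b -> (forall x, a < x < b -> k <= df x) ->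
  f a + k * (b - a) <= f b.
Proof.
  move=> f_deriv f_cont Hab Hk.
  have Hd x : a < x < b -> derivable_pt_lim (fun s => f s - k * s) x (df x - k).
    move=> Hx; apply/is_derive_Reals; have /is_derive_Reals Hf := f_deriv x Hx.
    by auto_derive; [exists (df x)|rewrite (is_derive_unique _ _ _ Hf); ring].
  have Hc x : a <= x <= b -> continuity_pt (fun s => f s - k * s) x.
    move=> Hx; apply: continuity_pt_minus; first exact: f_cont.
    by apply: continuity_pt_scal; apply: continuity_pt_id.
  suff: f a - k * a <= f b - k * b by lra.
  by apply: (incr_of_deriv_nonneg _ _ _ _ Hd Hc Hab) => x Hx; have := Hk x Hx; lra.
Qed.

Lemma deriv_ub_growth f df a b k :
  (forall x, a < x < b -> derivable_pt_lim f x (df x)) ->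
  (forall x, a <= x <= b -> continuity_pt f x) ->
  a <= b -> (forall x, a < x < b -> df x <= k) ->
  f b <= f a + k * (b - a).
Proof.
  move=> f_deriv f_cont Hab Hk.
  have := deriv_lb_growth (fun s => - f s) (fun s => - df s) a b (- k)
    (fun x Hx => derivable_pt_lim_opp _ _ _ (f_deriv x Hx))
    (fun x Hx => continuity_pt_opp _ _ (f_cont x Hx)) Hab
    (fun x Hx => ltac:(have := Hk x Hx; lra)).
  lra.
Qed.

Lemma linear_growth_absurd f a k C : 0 < k ->
  (forall b, a <= b -> f a + k * (b - a) <= f b) -> (forall b, a <= b -> f b <= C) ->
  False.
Proof.
  move=> Hk Hgrowth Hbound.
  pose T := a + (Rabs (C - f a) + 1) / k.
  have HT : k * (T - a) = Rabs (C - f a) + 1 by rewrite /T; field; lra.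
  have Hpos : 0 <= (Rabs (C - f a) + 1) / k.
    by apply: Rlt_le; apply: Rdiv_lt_0_compat; [have := Rabs_pos (C - f a)|]; lra.
  have := Hgrowth T ltac:(rewrite /T; lra); have := Hbound T ltac:(rewrite /T; lra).
  have := Rle_abs (C - f a); lra.
Qed.

Lemma IVT_root f x y : x <= y ->
  (forall z, x <= z <= y -> continuity_pt f z) -> f x * f y <= 0 ->
  exists z, x <= z <= y /\ f z = 0.
Proof.
  move=> Hxy Hc Hsign.
  have [Hx0|Hx0] := Req_dec (f x) 0; first by exists x; split; [lra|].
  have [Hy0|Hy0] := Req_dec (f y) 0; first by exists y; split; [lra|].
  have {}Hxy : x < y.
    by case: (Rle_lt_or_eq_dec _ _ Hxy) => // E; rewrite E in Hsign Hx0; nra.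
  have [Hneg|Hpos] := Rlt_or_le (f x) 0.
  - have [z [Hz Ez]] := IVT_interv f x y Hc Hxy Hneg ltac:(nra); by exists z.
  - have Hc' z : x <= z <= y -> continuity_pt (fun s => - f s) z.
      by move=> Hz; apply: continuity_pt_opp; apply: Hc.
    have [z [Hz Ez]] := IVT_interv (fun s => - f s) x y Hc' Hxy ltac:(lra) ltac:(nra).
    by exists z; split; [|lra].
Qed.

Lemma constant_sign f : (forall t, 0 < t -> continuity_pt f t) ->
  (forall t, 0 < t -> f t <> 0) ->
  (forall t, 0 < t -> 0 < f t) \/ (forall t, 0 < t -> f t < 0).
Proof.
  move=> Hc Hnz.
  have same_sign s t : 0 < s -> 0 < t -> 0 < f s -> 0 < f t.
  { move=> Hs Ht Hfs; case: (Rlt_or_le 0 (f t)) => // Hft; exfalso.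
    have Hft' : f t < 0 by have := Hnz t Ht; lra.
    have [Hst|Hts] := Rle_or_lt s t.
    - have [z [Hz Ez]] := IVT_root f s t Hst (fun z Hz => Hc z ltac:(lra)) ltac:(nra).
      exact: Hnz z ltac:(lra) Ez.
    - have [z [Hz Ez]] := IVT_root f t s (Rlt_le _ _ Hts) (fun z Hz => Hc z ltac:(lra)) ltac:(nra).
      exact: Hnz z ltac:(lra) Ez. }
  have [H1|H1] := Rlt_or_le 0 (f 1).
  - left; move=> t Ht; exact: (same_sign 1 t Rlt_0_1 Ht H1).
  - right; move=> t Ht; case: (Rlt_or_le (f t) 0) => // Hft.
    have := Hnz t Ht; have := Hnz 1 Rlt_0_1; have := same_sign t 1 Ht Rlt_0_1; lra.
Qed.

Lemma sq_eq0_of_mul_pos_le0 x e : 0 < e -> x ^ 2 * e <= 0 -> x = 0.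
Proof. by move=> He Hx; apply: Rsqr_0_uniq; rewrite /Rsqr; apply Rle_antisym; nra. Qed.

Lemma abs_le_of_sq_le x y M : 0 <= M -> x ^ 2 <= M * y ^ 2 -> Rabs x <= sqrt M * Rabs y.
Proof.
  move=> HM H; rewrite -(sqrt_pow2 (Rabs x) (Rabs_pos x)) -(sqrt_pow2 (Rabs y) (Rabs_pos y)).
  by rewrite -sqrt_mult; [apply: sqrt_le_1_alt; rewrite !pow2_abs|lra|nra].
Qed.

Lemma second_deriv_const k t0 : second_deriv (fun _ => k) t0 0.
Proof.
  exists 1, (fun _ => 0); split; [lra|split=> [t _|]]; exact: derivable_pt_lim_const.
Qed.

Lemma second_deriv_const_eq0 f k t0 l :
  (forall y, f y = k) -> second_deriv f t0 l -> l = 0.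
Proof.
  move=> Hf [del [phi1 [Hdel [Hd1 Hd2]]]].
  have Ephi y : Rabs (y - t0) < del -> phi1 y = 0.
    move=> Hy; apply: (uniqueness_limite f y); first exact: Hd1.
    apply: (derivable_pt_lim_ext_loc (fun _ => k) f y 0 1 Rlt_0_1)
      (derivable_pt_lim_const k y).
    by move=> z _; rewrite Hf.
  apply: (uniqueness_limite (fun _ => 0) t0); last exact: derivable_pt_lim_const.
  by apply: (derivable_pt_lim_ext_loc phi1 _ t0 l del Hdel) Hd2 => y Hy; apply: Ephi.
Qed.

Lemma second_deriv_reflect w t0 l :
  second_deriv w (- t0) l -> second_deriv (fun t => w (- t)) t0 l.
Proof.
  move=> [del [phi1 [Hdel [Hd1 Hd2]]]].
  exists del, (fun t => - phi1 (- t)); split=> //; split.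
  - move=> t Ht; apply: derivable_pt_lim_reflect; apply: Hd1.
    by rewrite -Rabs_Ropp; have -> : - (- t - - t0) = t - t0 by ring.
  - have := derivable_pt_lim_opp _ _ _ (derivable_pt_lim_reflect _ _ _ Hd2).
    by rewrite Ropp_involutive.
Qed.

Lemma second_deriv_opp f t0 l : second_deriv f t0 l -> second_deriv (fun t => - f t) t0 (- l).
Proof.
  move=> [del [phi1 [Hdel [Hd1 Hd2]]]]; exists del, (fun t => - phi1 t); split=> //; split.
  - by move=> t Ht; apply: (derivable_pt_lim_opp f t _ (Hd1 t Ht)).
  - exact: (derivable_pt_lim_opp phi1 t0 _ Hd2).
Qed.

Lemma second_deriv_ext_pos f g t0 l : 0 < t0 -> (forall t, 0 < t -> f t = g t) ->
  second_deriv f t0 l -> second_deriv g t0 l.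
Proof.
  move=> Ht0 E [del [phi1 [Hdel [Hd1 Hd2]]]].
  exists (Rmin del t0), phi1; split; first exact: Rmin_pos.
  split=> // t Ht.
  have Hdel' := Rmin_l del t0; have Ht0' := Rmin_r del t0.
  have [Ht1 Ht2] := Rabs_def2 _ _ Ht.
  apply: (derivable_pt_lim_ext_loc f _ _ _ t ltac:(lra)); last by apply: Hd1; lra.
  by move=> y /Rabs_def2 Hy; apply: E; lra.
Qed.

Lemma second_deriv_Derive w t l : second_deriv w t l ->
  derivable_pt_lim w t (Derive w t) /\ derivable_pt_lim (Derive w) t l.
Proof.
  move=> [del [phi1 [Hdel [Hd1 Hd2]]]].
  have Ephi y : Rabs (y - t) < del -> phi1 y = Derive w y.
    by move=> Hy; symmetry; apply: is_derive_unique; apply/is_derive_Reals; apply: Hd1.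
  split; last exact: derivable_pt_lim_ext_loc Ephi Hd2.
  by rewrite -Ephi; [apply: Hd1|]; rewrite Rminus_diag Rabs_R0.
Qed.

Lemma right_deriv_unique phi t0 l1 l2 :
  right_deriv phi t0 l1 -> right_deriv phi t0 l2 -> l1 = l2.
Proof.
  move=> H1 H2; case: (Req_dec l1 l2) => // Hne; exfalso.
  pose e := Rabs (l1 - l2) / 2.
  have He : 0 < e by apply: Rdiv_lt_0_compat; [apply: Rabs_pos_lt; lra|lra].
  have [d1 [Hd1 K1]] := H1 e He; have [d2 [Hd2 K2]] := H2 e He.
  pose s := Rmin d1 d2 / 2.
  have Hs : 0 < s < d1 /\ s < d2.
    by have := Rmin_l d1 d2; have := Rmin_r d1 d2; have := Rmin_pos _ _ Hd1 Hd2; rewrite /s; lra.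
  have A := K1 s ltac:(lra); have B := K2 s ltac:(lra).
  have := Rabs_triang (- ((phi (t0 + s) - phi t0) / s - l1)) ((phi (t0 + s) - phi t0) / s - l2).
  rewrite Rabs_Ropp; have -> : - ((phi (t0 + s) - phi t0) / s - l1) +
    ((phi (t0 + s) - phi t0) / s - l2) = l1 - l2 by ring.
  rewrite /e in A B; lra.
Qed.

Lemma right_deriv_ext f g l : (forall t, 0 <= t -> f t = g t) ->
  right_deriv f 0 l -> right_deriv g 0 l.
Proof.
  move=> E H eps Heps; have [d [Hd Hb]] := H eps Heps; exists d; split=> // s Hs.
  by rewrite -!E; [apply: Hb| |]; lra.
Qed.

Lemma left_deriv_reflect w l : right_deriv w 0 l -> left_deriv (fun t => w (- t)) 0 (- l).
Proof.
  move=> H eps Heps; have [d [Hd Hb]] := H eps Heps; exists d; split=> // s Hs.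
  have := Hb (- s) ltac:(lra); rewrite !Rplus_0_l Ropp_0.
  have -> : (w (- s) - w 0) / s - - l = - ((w (- s) - w 0) / - s - l) by field; lra.
  by rewrite Rabs_Ropp.
Qed.

Lemma right_deriv_reflect w l : left_deriv w 0 l -> right_deriv (fun t => w (- t)) 0 (- l).
Proof.
  move=> H eps Heps; have [d [Hd Hb]] := H eps Heps; exists d; split=> // s Hs.
  have := Hb (- s) ltac:(lra); rewrite !Rplus_0_l Ropp_0.
  have -> : (w (- s) - w 0) / s - - l = - ((w (- s) - w 0) / - s - l) by field; lra.
  by rewrite Rabs_Ropp.
Qed.

Lemma right_deriv_of_ode w k : continuity_pt w 0 ->
  (forall t, 0 < t -> derivable_pt_lim w t (k (w t))) -> continuity_pt k (w 0) ->
  right_deriv w 0 (k (w 0)).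
Proof.
  move=> /continuity_pt_eps Hw Hd /continuity_pt_eps Hk eps Heps.
  have [d1 [Hd1 K1]] := Hk eps Heps; have [d2 [Hd2 K2]] := Hw d1 Hd1.
  exists d2; split=> // s Hs; rewrite Rplus_0_l.
  have [z [Hz ->]] := MVT_open w (fun t => k (w t)) 0 s ltac:(lra)
    (fun x Hx => Hd x ltac:(lra))
    (fun x Hx => ltac:(case: (Rle_lt_or_eq_dec _ _ (proj1 Hx)) => [Hx0|<-];
       [exact: derivable_pt_lim_continuity_pt (Hd x Hx0)|exact/continuity_pt_eps])).
  have -> : k (w z) * (s - 0) / s = k (w z) by field; lra.
  by apply: K1; apply: K2; rewrite Rminus_0_r Rabs_pos_eq; lra.
Qed.

(** * The equation [w'' = - h w] on a half-line *)

Definition speed (P : R -> R) (s : R) : R := sqrt (2 * P s).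

Lemma speed_cont P x : continuity_pt P x -> 0 <= P x -> continuity_pt (speed P) x.
Proof.
  move=> HP Hx; apply: (continuity_pt_comp (fun s => 2 * P s) sqrt).
  - by apply: continuity_pt_scal.
  - by apply: continuity_pt_sqrt; lra.
Qed.

Lemma ode_reflect h w dw :
  (forall t, 0 < t -> derivable_pt_lim w t (dw t)) ->
  (forall t, 0 < t -> derivable_pt_lim dw t (- h (w t))) ->
  (forall t, 0 < t -> derivable_pt_lim (fun t => - w t) t (- dw t)) /\
  (forall t, 0 < t -> derivable_pt_lim (fun t => - dw t) t (- (fun s => - h (- s)) (- w t))).
Proof.
  move=> w_deriv dw_deriv; split=> t Ht; first exact: (derivable_pt_lim_opp w t _ (w_deriv t Ht)).
  by rewrite /= (Ropp_involutive (w t)); apply: (derivable_pt_lim_opp dw t _ (dw_deriv t Ht)).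
Qed.

Section HalfLineODE.
Variables (h w dw : R -> R).
Hypothesis w_deriv : forall t, 0 < t -> derivable_pt_lim w t (dw t).
Hypothesis dw_deriv : forall t, 0 < t -> derivable_pt_lim dw t (- h (w t)).

Let w_cont t : 0 < t -> continuity_pt w t.
Proof. by move=> Ht; apply: derivable_pt_lim_continuity_pt (w_deriv t Ht). Qed.

Let dw_cont t : 0 < t -> continuity_pt dw t.
Proof. by move=> Ht; apply: derivable_pt_lim_continuity_pt (dw_deriv t Ht). Qed.

Lemma deriv_nonneg_of_bounded_below B :
  (forall t, 0 < t -> 0 < h (w t)) -> (forall t, 0 < t -> B <= w t) ->
  forall t, 0 < t -> 0 <= dw t.
Proof.
  move=> h_pos w_ge t1 Ht1; case: (Rle_or_lt 0 (dw t1)) => // Hneg; exfalso.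
  have dw_decr x : t1 <= x -> dw x <= dw t1.
  { move=> Hx; apply: (decr_of_deriv_nonpos dw (fun s => - h (w s))) => // [y Hy|y Hy|y Hy].
    - by apply: dw_deriv; lra.
    - by apply: dw_cont; lra.
    - by have := h_pos y ltac:(lra); lra. }
  apply: (linear_growth_absurd (fun t => - w t) t1 (- dw t1) (- B)) => [|b Hb|b Hb].
  - lra.
  - have := deriv_ub_growth w dw t1 b (dw t1) (fun x Hx => w_deriv x ltac:(lra))
      (fun x Hx => w_cont x ltac:(lra)) Hb (fun x Hx => dw_decr x ltac:(lra)); lra.
  - by have := w_ge b ltac:(lra); lra.
Qed.

Lemma not_trapped_below_level B c eta : 0 < eta -> (forall x, continuity_pt h x) ->
  (forall t, 0 < t -> B < w t <= c - eta) -> (forall s, B < s < c -> 0 < h s) -> False.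
Proof.
  move=> Heta h_cont w_range h_pos.
  have dw_nonneg := deriv_nonneg_of_bounded_below B
    (fun t Ht => h_pos (w t) ltac:(have := w_range t Ht; lra))
    (fun t Ht => Rlt_le _ _ (proj1 (w_range t Ht))).
  have w_incr t : 1 <= t -> w 1 <= w t.
  { move=> Ht; apply: (incr_of_deriv_nonneg w dw) => // [x Hx|x Hx|x Hx].
    - by apply: w_deriv; lra.
    - by apply: w_cont; lra.
    - by apply: dw_nonneg; lra. }
  have [Hw1 Hw1'] := w_range 1 Rlt_0_1.
  have [smin [Hmin Hsmin]] := continuity_ab_min h (w 1) (c - eta) Hw1' (fun y _ => h_cont y).
  have Hg : 0 < h smin by apply: h_pos; lra.
  apply: (linear_growth_absurd (fun t => - dw t) 1 (h smin) 0) => // [b Hb|b Hb].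
  - have := deriv_ub_growth dw (fun s => - h (w s)) 1 b (- h smin)
      (fun x Hx => dw_deriv x ltac:(lra)) (fun x Hx => dw_cont x ltac:(lra)) Hb.
    have H x : 1 < x < b -> - h (w x) <= - h smin.
      by move=> Hx; have := w_incr x ltac:(lra); have := w_range x ltac:(lra);
        move=> ? ?; have := Hmin (w x) ltac:(lra); lra.
    move=> /(_ H); lra.
  - by have := dw_nonneg b ltac:(lra); lra.
Qed.

Section LevelSet.
Variables (c m : R).
Hypothesis w_cont0 : continuity_pt w 0.
Hypothesis dw_bound : forall t, 0 < t -> Rabs (dw t) <= m * Rabs (w t - c).

Let w_cont_nonneg t : 0 <= t -> continuity_pt w t.
Proof. by case/Rle_lt_or_eq_dec => [/w_cont|<-]. Qed.

Let prod_bound t : 0 < t ->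
  - (m * (w t - c) ^ 2) <= (w t - c) * dw t <= m * (w t - c) ^ 2.
Proof.
  move=> Ht; have := dw_bound t Ht; rewrite -(pow2_abs (w t - c)).
  have := Rabs_pos (w t - c); have := Rle_abs ((w t - c) * dw t);
    have := Rabs_maj2 ((w t - c) * dw t); rewrite Rabs_mult; nra.
Qed.

(* Gronwall: [(w - c)^2 e^(k t)] is monotone for [k = +-2m], so it cannot leave or reach zero. *)
Lemma level_invariant s t : 0 <= s -> 0 <= t -> w s = c -> w t = c.
Proof.
  move=> Hs Ht Hws.
  pose z k x := (w x - c) ^ 2 * exp (k * x).
  have z_deriv k x : 0 < x -> derivable_pt_lim (z k) x
      (exp (k * x) * (2 * ((w x - c) * dw x) + k * (w x - c) ^ 2)).
    move=> Hx; rewrite /z; apply/is_derive_Reals; have /is_derive_Reals Hw := w_deriv x Hx.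
    by auto_derive; [exists (dw x)|rewrite (is_derive_unique _ _ _ Hw); ring].
  have z_cont k x : 0 <= x -> continuity_pt (z k) x.
  { move=> Hx; apply: (continuity_pt_mult (fun x => (w x - c) ^ 2) (fun x => exp (k * x))).
    - apply: (continuity_pt_comp w (fun y => (y - c) ^ 2)); first exact: w_cont_nonneg.
      apply: (@derivable_pt_lim_continuity_pt _ _ (2 * (w x - c))).
      by apply/is_derive_Reals; auto_derive; [|ring].
    - apply: (continuity_pt_comp (fun x => k * x) exp).
        by apply: continuity_pt_scal; apply: continuity_pt_id.
      exact: derivable_continuous_pt (derivable_pt_exp _). }
  have zs k : z k s = 0 by rewrite /z Hws Rminus_diag; ring.
  suff [k Hk] : exists k, z k t <= 0.
  { by apply: Rminus_diag_uniq; apply: (sq_eq0_of_mul_pos_le0 _ (exp (k * t)) (exp_pos _)). }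
  case: (Rle_or_lt s t) => Hst; [exists (- 2 * m)|exists (2 * m)]; rewrite -(zs (- 2 * m)).
  - apply: (decr_of_deriv_nonpos _ _ s t (fun x Hx => z_deriv _ x ltac:(lra))
      (fun x Hx => z_cont _ x ltac:(lra)) Hst) => x Hx.
    by have := prod_bound x ltac:(lra); have := exp_pos (- 2 * m * x); nra.
  - rewrite zs -(zs (2 * m)).
    apply: (incr_of_deriv_nonneg _ _ t s (fun x Hx => z_deriv _ x ltac:(lra))
      (fun x Hx => z_cont _ x ltac:(lra)) (Rlt_le _ _ Hst)) => x Hx.
    by have := prod_bound x ltac:(lra); have := exp_pos (2 * m * x); nra.
Qed.
End LevelSet.

(* [w] cannot reach [c] by [level_invariant]; being concave and bounded below it is
   nondecreasing, so [w' = + sqrt (w'^2)]. *)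
Lemma increasing_profile P c m B : continuity_pt w 0 ->
  (forall t, 0 < t -> dw t ^ 2 = 2 * P (w t)) ->
  (forall t, 0 < t -> Rabs (dw t) <= m * Rabs (w t - c)) ->
  (forall s, B < s < c -> 0 < h s) -> (forall t, 0 < t -> B < w t) -> w 0 < c ->
  forall t, 0 < t -> w 0 <= w t < c /\ dw t = speed P (w t).
Proof.
  move=> w_cont0 energy dw_bound h_pos w_ge Hw0.
  have w_cont_nonneg t : 0 <= t -> continuity_pt w t.
    by move=> /Rle_lt_or_eq_dec [/w_cont|<-].
  have w_ne_c t : 0 <= t -> w t <> c.
    by move=> Ht Hwt; have := level_invariant c m w_cont0 dw_bound t 0 Ht (Rle_refl 0) Hwt; lra.
  have w_lt_c t : 0 < t -> w t < c.
  { move=> Ht; case: (Rlt_or_le (w t) c) => // Hwt; exfalso.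
    have [z [Hz Ez]] := IVT_root (fun s => w s - c) 0 t (Rlt_le _ _ Ht)
      (fun z Hz => continuity_pt_minus _ _ _ (w_cont_nonneg z (proj1 Hz)) (continuity_pt_cst c z))
      ltac:(nra).
    by apply: (w_ne_c z (proj1 Hz)); lra. }
  have dw_nonneg := deriv_nonneg_of_bounded_below B
    (fun t Ht => h_pos (w t) (conj (w_ge t Ht) (w_lt_c t Ht))) (fun t Ht => Rlt_le _ _ (w_ge t Ht)).
  move=> t Ht; split; first split.
  - apply: (incr_of_deriv_nonneg w dw 0 t) (Rlt_le _ _ Ht) _ => [x Hx|x Hx|x Hx].
    + by apply: w_deriv; lra.
    + by apply: w_cont_nonneg; lra.
    + by apply: dw_nonneg; lra.
  - exact: w_lt_c.
  - by rewrite /speed -energy // sqrt_pow2 //; apply: dw_nonneg.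
Qed.

End HalfLineODE.

(** * The first-order equation [w' = speed P w] *)

Section Flow.
Variables (h P : R -> R) (a c M : R).
Hypothesis a_lt_c : a < c.
Hypothesis P_deriv : forall x, derivable_pt_lim P x (- h x).
Hypothesis P_pos : forall s, a <= s < c -> 0 < P s.
Hypothesis M_pos : 0 < M.
Hypothesis P_quadratic : forall s, a <= s <= c -> P s <= M * (s - c) ^ 2.

Let P_cont x : continuity_pt P x.
Proof. exact: derivable_pt_lim_continuity_pt (P_deriv x). Qed.

Lemma speed_pos s : a <= s < c -> 0 < speed P s.
Proof. by move=> Hs; apply: sqrt_lt_R0; have := P_pos s Hs; lra. Qed.

(* The speed is frozen at its value at [a] to the left of [a], so that the flow below
   is defined, and strictly increasing, for all times. *)
Definition inv_speed (s : R) : R := / speed P (Rmax a s).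
Definition travel_time (s : R) : R := RInt inv_speed a s.

Let Rmax_range s : s < c -> a <= Rmax a s < c.
Proof. by move=> Hs; split; [apply: Rmax_l|apply: Rmax_lub_lt]. Qed.

Lemma inv_speed_pos s : s < c -> 0 < inv_speed s.
Proof. by move=> Hs; apply: Rinv_0_lt_compat; apply: speed_pos; apply: Rmax_range. Qed.

Lemma inv_speed_cont s : s < c -> continuity_pt inv_speed s.
Proof.
  move=> Hs; have Hspeed := speed_pos _ (Rmax_range _ Hs).
  apply: continuity_pt_inv; last by apply: Rgt_not_eq.
  apply: (continuity_pt_comp (Rmax a) (speed P)); first exact: continuity_pt_Rmax.
  by apply: speed_cont; [apply: P_cont|have := P_pos _ (Rmax_range _ Hs); lra].
Qed.

Lemma travel_time_deriv s : s < c -> derivable_pt_lim travel_time s (inv_speed s).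
Proof.
  move=> Hs; apply/is_derive_Reals; apply: is_derive_RInt.
  - have Hr : 0 < (c - s) / 2 by lra.
    exists (mkposreal _ Hr) => y Hy; have /Rabs_def2 {}Hy : Rabs (y - s) < (c - s) / 2 := Hy.
    apply: RInt_correct; apply: ex_RInt_continuous => z Hz.
    apply/continuity_pt_filterlim; apply: inv_speed_cont.
    by have := Rmax_lub_lt a y c a_lt_c ltac:(lra); lra.
  - by apply/continuity_pt_filterlim; apply: inv_speed_cont.
Qed.

Lemma travel_time_cont s : s < c -> continuity_pt travel_time s.
Proof. by move=> Hs; apply: derivable_pt_lim_continuity_pt (travel_time_deriv _ Hs). Qed.

Lemma travel_time_a : travel_time a = 0.
Proof. exact: RInt_point. Qed.

Lemma travel_time_incr x y : x < y -> y < c -> travel_time x < travel_time y.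
Proof.
  move=> Hxy Hy; apply: (strict_incr_of_deriv_pos _ inv_speed) => // [z Hz|z Hz|z Hz].
  - by apply: travel_time_deriv; lra.
  - by apply: travel_time_cont; lra.
  - by apply: inv_speed_pos; lra.
Qed.

Lemma travel_time_inj x y : x < c -> y < c -> travel_time x = travel_time y -> x = y.
Proof.
  move=> Hx Hy E; case: (Rtotal_order x y) => [Hxy|[//|Hxy]].
  - by have := travel_time_incr _ _ Hxy Hy; lra.
  - by have := travel_time_incr _ _ Hxy Hx; lra.
Qed.

Lemma travel_time_left s : s <= a -> travel_time s = (s - a) / speed P a.
Proof.
  case/Rle_lt_or_eq_dec => [Hs|->]; last by rewrite travel_time_a /Rdiv Rminus_diag Rmult_0_l.
  have [z [Hz E]] := MVT_open travel_time inv_speed s a Hs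
    (fun x Hx => travel_time_deriv x ltac:(lra)) (fun x Hx => travel_time_cont x ltac:(lra)).
  move: E; rewrite travel_time_a /inv_speed Rmax_left; last lra.
  have := speed_pos a ltac:(lra); move=> Ha E; rewrite /Rdiv; lra.
Qed.

(* Near [c], [P s <= M (s - c)^2] makes the speed at most linear in [c - s], hence the
   travel time to [c] logarithmically divergent. *)
Lemma travel_time_lower s : a <= s < c ->
  (ln (c - a) - ln (c - s)) / sqrt (2 * M) <= travel_time s.
Proof.
  move=> Hs; have Hk : 0 < sqrt (2 * M) by apply: sqrt_lt_R0; lra.
  pose F x := travel_time x + ln (c - x) / sqrt (2 * M).
  have F_deriv x : x < c -> derivable_pt_lim F x (inv_speed x - / (c - x) / sqrt (2 * M)).
  { move=> Hx; have /is_derive_Reals H := travel_time_deriv x Hx; apply/is_derive_Reals.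
    rewrite /F; auto_derive; first by repeat split; [exists (inv_speed x)|lra].
    by rewrite (is_derive_unique _ _ _ H); field; lra. }
  have inv_speed_lower x : a <= x < c -> / (c - x) / sqrt (2 * M) <= inv_speed x.
  { move=> Hx; rewrite /inv_speed /speed Rmax_right; last lra.
    rewrite /Rdiv -Rinv_mult; apply: Rinv_le_contravar; first exact: speed_pos.
    have -> : (c - x) * sqrt (2 * M) = sqrt (2 * M * (x - c) ^ 2).
    { rewrite (sqrt_mult (2 * M)); [|lra|nra].
      have -> : (x - c) ^ 2 = (c - x) ^ 2 by ring.
      by rewrite sqrt_pow2; [ring|lra]. }
    by apply: sqrt_le_1_alt; have := P_quadratic x ltac:(lra); lra. }
  suff : F a <= F s by rewrite /F travel_time_a; lra.
  apply: (incr_of_deriv_nonneg F (fun x => inv_speed x - / (c - x) / sqrt (2 * M)))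
    => [x Hx|x Hx||x Hx].
  - by apply: F_deriv; lra.
  - by apply: derivable_pt_lim_continuity_pt (F_deriv x _); lra.
  - lra.
  - by have := inv_speed_lower x ltac:(lra); lra.
Qed.

Lemma travel_time_surj t : {s | s < c /\ travel_time s = t}.
Proof.
  have Ha := speed_pos a ltac:(lra).
  have Hk : 0 < sqrt (2 * M) by apply: sqrt_lt_R0; lra.
  have := Rmin_l t 0; have := Rmin_r t 0; have := Rmax_l t 0; have := Rmax_r t 0.
  move=> Hmax0 Hmax Hmin0 Hmin.
  pose lo := a + (Rmin t 0 - 1) * speed P a.
  pose e := exp (- (Rmax t 0 + 1) * sqrt (2 * M)).
  pose hi := c - (c - a) * e.
  have He : 0 < e < 1.
  { split; first exact: exp_pos.
    by have := exp_increasing (- (Rmax t 0 + 1) * sqrt (2 * M)) 0 ltac:(nra); rewrite exp_0. }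
  have Hlo : lo < a by rewrite /lo; nra.
  have Hhi : a < hi < c by rewrite /hi; nra.
  have Tlo : travel_time lo < t.
  { rewrite travel_time_left; [rewrite /lo|by apply: Rlt_le].
    have -> : (a + (Rmin t 0 - 1) * speed P a - a) / speed P a = Rmin t 0 - 1 by field; lra.
    lra. }
  have Thi : t < travel_time hi.
  { have := travel_time_lower hi ltac:(lra).
    have -> : ln (c - a) - ln (c - hi) = (Rmax t 0 + 1) * sqrt (2 * M).
    { rewrite /hi; have -> : c - (c - (c - a) * e) = (c - a) * e by ring.
      by rewrite ln_mult ?ln_exp; [ring|lra|lra]. }
    have -> : (Rmax t 0 + 1) * sqrt (2 * M) / sqrt (2 * M) = Rmax t 0 + 1 by field; lra.
    lra. }
  have [z [Hz Ez]] := IVT_interv (fun s => travel_time s - t) lo hi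
    (fun z Hz => continuity_pt_minus _ _ _ (travel_time_cont z ltac:(lra)) (continuity_pt_cst t z))
    ltac:(lra) ltac:(lra) ltac:(lra).
  by exists z; split; lra.
Qed.

Definition flow (t : R) : R := proj1_sig (travel_time_surj t).

Lemma flow_lt_c t : flow t < c.
Proof. exact: (proj1 (proj2_sig (travel_time_surj t))). Qed.

Lemma travel_time_flow t : travel_time (flow t) = t.
Proof. exact: (proj2 (proj2_sig (travel_time_surj t))). Qed.

Lemma flow_0 : flow 0 = a.
Proof.
  by apply: travel_time_inj; [apply: flow_lt_c|lra|rewrite travel_time_flow travel_time_a].
Qed.

Lemma flow_incr x y : x < y -> flow x < flow y.
Proof.
  move=> Hxy; case: (Rlt_or_le (flow x) (flow y)) => // /Rle_lt_or_eq_dec [H|E].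
  - by have := travel_time_incr _ _ H (flow_lt_c x); rewrite !travel_time_flow; lra.
  - by have := travel_time_flow x; rewrite -E travel_time_flow; lra.
Qed.

Lemma flow_le x y : x <= y -> flow x <= flow y.
Proof. by case/Rle_lt_or_eq_dec => [/flow_incr|->]; lra. Qed.

Lemma flow_range t : 0 <= t -> a <= flow t < c.
Proof. by move=> Ht; split; [rewrite -flow_0; apply: flow_le|apply: flow_lt_c]. Qed.

Lemma flow_cont t : continuity_pt flow t.
Proof.
  apply: (continuity_pt_recip_interv travel_time flow (flow (t - 1)) (flow (t + 1))).
  - by apply: flow_incr; lra.
  - by move=> x y _ Hxy Hy; apply: travel_time_incr => //; have := flow_lt_c (t + 1); lra.
  - by move=> x _ _; apply: travel_time_flow.
  - by rewrite !travel_time_flow => x Hx1 Hx2; split; apply: flow_le.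
  - by move=> x Hx; apply: travel_time_cont; have := flow_lt_c (t + 1); lra.
  - by rewrite !travel_time_flow; lra.
Qed.

Lemma flow_deriv t : derivable_pt_lim flow t (speed P (Rmax a (flow t))).
Proof.
  have lt_c y : y <= flow (t + 1) -> y < c by have := flow_lt_c (t + 1); lra.
  pose prf y (Hy : flow (t - 1) <= y <= flow (t + 1)) :=
    exist _ (inv_speed y) (travel_time_deriv y (lt_c y (proj2 Hy))) : derivable_pt travel_time y.
  have Hi : flow (t - 1) <= flow t <= flow (t + 1) by split; apply: flow_le; lra.
  have := derivable_pt_lim_recip_interv travel_time flow (t - 1) (t + 1) t prf (flow_cont t)
    ltac:(lra) ltac:(lra) Hi (fun x _ => travel_time_flow x).
  rewrite (derive_pt_eq_0 _ _ (inv_speed (flow t)) (prf _ Hi) (travel_time_deriv _ (flow_lt_c t))).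
  have Hpos := inv_speed_pos _ (flow_lt_c t).
  move=> /(_ (Rgt_not_eq _ _ Hpos)).
  by rewrite /inv_speed /Rdiv Rmult_1_l Rinv_inv.
Qed.

Lemma flow_deriv_nonneg t : 0 <= t -> derivable_pt_lim flow t (speed P (flow t)).
Proof. by move=> Ht; have := flow_deriv t; rewrite Rmax_right //; have := flow_range t Ht; lra. Qed.

Lemma speed_flow_deriv t : 0 < t -> derivable_pt_lim (fun s => speed P (flow s)) t (- h (flow t)).
Proof.
  move=> Ht; have Hr := flow_range t (Rlt_le _ _ Ht).
  have Hspeed := speed_pos _ Hr.
  have /is_derive_Reals Hf := flow_deriv_nonneg t (Rlt_le _ _ Ht).
  have /is_derive_Reals HP := P_deriv (flow t).
  apply/is_derive_Reals; rewrite /speed in Hspeed Hf *; auto_derive.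
  - repeat split; [by exists (- h (flow t))|by exists (sqrt (2 * P (flow t)))|].
    by have := P_pos _ Hr; lra.
  - rewrite (is_derive_unique _ _ _ Hf) (is_derive_unique _ _ _ HP); field; lra.
Qed.

Lemma flow_unique w : (forall t, 0 <= t -> continuity_pt w t) ->
  (forall t, 0 < t -> derivable_pt_lim w t (speed P (w t))) -> w 0 = a ->
  (forall t, 0 <= t -> a <= w t < c) -> forall t, 0 <= t -> w t = flow t.
Proof.
  move=> w_cont w_deriv w0 w_range t Ht.
  apply: travel_time_inj; [exact: (proj2 (w_range t Ht))|exact: flow_lt_c|].
  rewrite travel_time_flow; case/Rle_lt_or_eq_dec: Ht => [Ht|<-]; last by rewrite w0 travel_time_a.
  have D s : 0 < s -> derivable_pt_lim (fun s => travel_time (w s)) s 1.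
  { move=> Hs; have Hr := w_range s (Rlt_le _ _ Hs).
    have := derivable_pt_lim_comp w travel_time s _ _ (w_deriv s Hs)
      (travel_time_deriv _ (proj2 Hr)).
    rewrite /inv_speed Rmax_right; last lra.
    by rewrite Rinv_l //; apply: Rgt_not_eq; apply: speed_pos. }
  have [z [Hz E]] := MVT_open (fun s => travel_time (w s)) (fun _ => 1) 0 t Ht
    (fun x Hx => D x ltac:(lra))
    (fun x Hx => continuity_pt_comp w travel_time x (w_cont x ltac:(lra))
       (travel_time_cont _ (proj2 (w_range x ltac:(lra))))).
  by move: E; rewrite w0 travel_time_a; lra.
Qed.

Lemma flow_second_deriv t : 0 < t -> second_deriv flow t (- h (flow t)).
Proof.
  move=> Ht; exists t, (fun s => speed P (flow s)); split=> //; split.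
  - by move=> s /Rabs_def2 Hs; apply: flow_deriv_nonneg; lra.
  - exact: speed_flow_deriv.
Qed.

Lemma first_order_unique w1 w2 :
  (forall t, 0 <= t -> continuity_pt w1 t) -> (forall t, 0 <= t -> continuity_pt w2 t) ->
  (forall t, 0 < t -> derivable_pt_lim w1 t (speed P (w1 t))) ->
  (forall t, 0 < t -> derivable_pt_lim w2 t (speed P (w2 t))) ->
  w1 0 = a -> w2 0 = a ->
  (forall t, 0 <= t -> a <= w1 t < c) -> (forall t, 0 <= t -> a <= w2 t < c) ->
  forall t, 0 <= t -> w1 t = w2 t.
Proof.
  move=> c1 c2 d1 d2 e1 e2 r1 r2 t Ht.
  by rewrite (flow_unique w1 c1 d1 e1 r1 t Ht) (flow_unique w2 c2 d2 e2 r2 t Ht).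
Qed.
End Flow.

(** * Bounded positive solutions for a KPP nonlinearity *)

(* Values on [t < 0] only matter through the two-sided [continuity_pt w 0]. *)
Definition bounded_positive_solution (h w : R -> R) : Prop :=
  (forall t, 0 < t -> second_deriv w t (- h (w t))) /\
  (forall t, 0 <= t -> continuity_pt w t) /\
  (forall t, 0 <= t -> 0 < w t) /\ (exists C, forall t, 0 <= t -> w t <= C).

Lemma bounded_positive_solution_ode h w : bounded_positive_solution h w ->
  (forall t, 0 < t -> derivable_pt_lim w t (Derive w t)) /\
  (forall t, 0 < t -> derivable_pt_lim (Derive w) t (- h (w t))).
Proof.
  by move=> [Hw _]; split=> t Ht; have [] := second_deriv_Derive _ _ _ (Hw t Ht).
Qed.

Definition initial_slope (P : R -> R) (c a : R) : R :=
  if Rlt_dec a c then speed P a else - speed P a.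

Record kpp_potential (h P : R -> R) (c : R) : Prop := KppPotential {
  kpp_c_pos : 0 < c;
  kpp_lipschitz : loc_lipschitz h;
  kpp_root : h c = 0;
  kpp_pos : forall s, 0 < s < c -> 0 < h s;
  kpp_neg : forall s, c < s -> h s < 0;
  kpp_deriv : forall x, derivable_pt_lim P x (- h x);
  kpp_potential_root : P c = 0 }.

Section Profile.
Variables (h P : R -> R) (c : R).
Hypothesis hP : kpp_potential h P c.

Let c_pos := kpp_c_pos _ _ _ hP.
Let h_lip := kpp_lipschitz _ _ _ hP.
Let h_c := kpp_root _ _ _ hP.
Let h_pos := kpp_pos _ _ _ hP.
Let h_neg := kpp_neg _ _ _ hP.
Let P_deriv := kpp_deriv _ _ _ hP.
Let P_c := kpp_potential_root _ _ _ hP.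

Let h_cont : forall x, continuity_pt h x := loc_lipschitz_continuity_pt _ h_lip.

Let P_cont x : continuity_pt P x := derivable_pt_lim_continuity_pt (P_deriv x).

Lemma potential_decr a b : 0 <= a < b -> b <= c -> P b < P a.
Proof.
  move=> Hab Hb; apply: (strict_decr_of_deriv_neg P (fun x => - h x)) => [x _|x _||x Hx].
  - exact: P_deriv.
  - exact: P_cont.
  - lra.
  - by have := h_pos x ltac:(lra); lra.
Qed.

Lemma potential_incr a b : c <= a < b -> P a < P b.
Proof.
  move=> Hab; apply: (strict_incr_of_deriv_pos P (fun x => - h x)) => [x _|x _||x Hx].
  - exact: P_deriv.
  - exact: P_cont.
  - lra.
  - by have := h_neg x ltac:(lra); lra.
Qed.

Lemma potential_pos s : 0 <= s -> s <> c -> 0 < P s.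
Proof.
  move=> Hs Hsc; rewrite -P_c; case: (Rlt_or_le s c) => Hlt.
  - by apply: potential_decr; lra.
  - by apply: potential_incr; lra.
Qed.

Lemma potential_nonneg s : 0 <= s -> 0 <= P s.
Proof.
  by move=> Hs; case: (Req_dec s c) => [->|Hsc]; [lra|have := potential_pos _ Hs Hsc; lra].
Qed.

Lemma potential_quadratic A B :
  exists M, 0 < M /\ forall s, A <= s <= B -> P s <= M * (s - c) ^ 2.
Proof.
  have [L HL] := h_lip (Rmin A c) (Rmax B c).
  have := Rmin_l A c; have := Rmin_r A c; have := Rmax_l B c; have := Rmax_r B c.
  move=> HBc HB HAc HA.
  have HL0 := Rabs_pos L; exists ((Rabs L + 1) / 2); split; first lra.
  have h_bound x : Rmin A c <= x <= Rmax B c -> Rabs (h x) <= (Rabs L + 1) * Rabs (x - c).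
  { move=> Hx; have := HL x c ltac:(lra) ltac:(lra); rewrite h_c Rminus_0_r.
    have := Rabs_pos (x - c); have := Rle_abs L; nra. }
  pose G x := (Rabs L + 1) / 2 * (x - c) ^ 2 - P x.
  have G_deriv x : derivable_pt_lim G x ((Rabs L + 1) * (x - c) + h x).
  { apply/is_derive_Reals; have /is_derive_Reals HP := P_deriv x.
    by rewrite /G; auto_derive; [exists (- h x)|rewrite (is_derive_unique _ _ _ HP); field]. }
  have G_cont x : continuity_pt G x := derivable_pt_lim_continuity_pt (G_deriv x).
  have Gc : G c = 0 by rewrite /G P_c; ring.
  move=> s Hs; suff : 0 <= G s by rewrite /G; lra.
  rewrite -Gc; case: (Rle_or_lt c s) => Hcs.
  - apply: (incr_of_deriv_nonneg G _ c s (fun x _ => G_deriv x) (fun x _ => G_cont x) Hcs).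
    move=> x Hx; have := h_bound x ltac:(lra); rewrite (Rabs_pos_eq (x - c)); last lra.
    by have := Rabs_maj2 (h x); lra.
  - apply: (decr_of_deriv_nonpos G _ s c (fun x _ => G_deriv x) (fun x _ => G_cont x)
      (Rlt_le _ _ Hcs)).
    move=> x Hx; have := h_bound x ltac:(lra); rewrite (Rabs_left (x - c)); last lra.
    by have := Rle_abs (h x); lra.
Qed.

Section Solution.
Variable w : R -> R.
Hypothesis w_sol : bounded_positive_solution h w.

Let w_deriv := proj1 (bounded_positive_solution_ode _ _ w_sol).
Let dw_deriv := proj2 (bounded_positive_solution_ode _ _ w_sol).
Let w_cont : forall t, 0 <= t -> continuity_pt w t := proj1 (proj2 w_sol).
Let w_pos : forall t, 0 <= t -> 0 < w t := proj1 (proj2 (proj2 w_sol)).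

Lemma energy_const : exists K, forall t, 0 < t -> Derive w t ^ 2 = 2 * P (w t) + 2 * K.
Proof.
  have E_deriv t : 0 < t -> derivable_pt_lim (fun s => Derive w s ^ 2 / 2 - P (w s)) t 0.
  { move=> Ht; have /is_derive_Reals A1 := w_deriv t Ht.
    have /is_derive_Reals A2 := dw_deriv t Ht; have /is_derive_Reals A3 := P_deriv (w t).
    apply/is_derive_Reals; auto_derive.
    - by repeat split; [exists (- h (w t))|exists (- h (w t))|exists (Derive w t)].
    - rewrite (is_derive_unique _ _ _ A1) (is_derive_unique _ _ _ A2) (is_derive_unique _ _ _ A3).
      field. }
  exists (Derive w 1 ^ 2 / 2 - P (w 1)) => t Ht.
  by have := const_of_deriv0 _ E_deriv t Ht; lra.
Qed.

(* If [K > 0], [w'] never vanishes, so it keeps a sign and [|w'| >= sqrt (2 K)]: [w] would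
   grow linearly upwards or downwards. *)
Lemma energy_not_pos K : (forall t, 0 < t -> Derive w t ^ 2 = 2 * P (w t) + 2 * K) -> K <= 0.
Proof.
  move=> HK; case: (Rle_or_lt K 0) => // Kpos; exfalso.
  have [_ [_ [_ [C w_le]]]] := w_sol.
  have Hk : 0 < sqrt (2 * K) by apply: sqrt_lt_R0; lra.
  have dw_large t : 0 < t -> sqrt (2 * K) <= Rabs (Derive w t).
  { move=> Ht; rewrite -(sqrt_pow2 _ (Rabs_pos _)) pow2_abs; apply: sqrt_le_1_alt.
    by rewrite HK //; have := potential_nonneg _ (Rlt_le _ _ (w_pos t (Rlt_le _ _ Ht))); lra. }
  case: (constant_sign (Derive w)) => [t Ht|t Ht Hz|Hsign|Hsign].
  - exact: derivable_pt_lim_continuity_pt (dw_deriv t Ht).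
  - by have := dw_large t Ht; rewrite Hz Rabs_R0; lra.
  - apply: (linear_growth_absurd w 1 (sqrt (2 * K)) C Hk) => [b Hb|b Hb]; last by apply: w_le; lra.
    apply: (deriv_lb_growth w (Derive w)) => // [x Hx|x Hx|x Hx].
    + by apply: w_deriv; lra.
    + by apply: w_cont; lra.
    + have := dw_large x ltac:(lra); have := Hsign x ltac:(lra).
      by move=> ?; rewrite Rabs_pos_eq; lra.
  - apply: (linear_growth_absurd (fun t => - w t) 1 (sqrt (2 * K)) 0 Hk) => [b Hb|b Hb];
      last by have := w_pos b ltac:(lra); lra.
    suff : w b <= w 1 + - sqrt (2 * K) * (b - 1) by lra.
    apply: (deriv_ub_growth w (Derive w)) => // [x Hx|x Hx|x Hx].
    + by apply: w_deriv; lra.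
    + by apply: w_cont; lra.
    + have := dw_large x ltac:(lra); have := Hsign x ltac:(lra).
      by move=> ?; rewrite Rabs_left; lra.
Qed.

(* If [K < 0], [P w >= - K] keeps [w] away from [c], on one side of it; there [h] has a
   sign, which is impossible for a bounded solution (after [s |-> - s] if [w > c]). *)
Lemma energy_not_neg K : (forall t, 0 < t -> Derive w t ^ 2 = 2 * P (w t) + 2 * K) -> 0 <= K.
Proof.
  move=> HK; case: (Rle_or_lt 0 K) => // Kneg; exfalso.
  have [_ [_ [_ [C w_le]]]] := w_sol.
  have [del [Hdel Hnear]] := proj1 (continuity_pt_eps P c) (P_cont c) (- K) ltac:(lra).
  have w_far t : 0 < t -> del <= Rabs (w t - c).
  { move=> Ht; case: (Rle_or_lt del (Rabs (w t - c))) => // Hlt.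
    have := Hnear (w t) Hlt; rewrite P_c Rminus_0_r.
    by have := HK t Ht; have := pow2_ge_0 (Derive w t); have := Rle_abs (P (w t)); lra. }
  case: (constant_sign (fun t => w t - c)) => [t Ht|t Ht Hz|Hsign|Hsign].
  - by apply: continuity_pt_minus; [apply: w_cont; lra|apply: continuity_pt_cst].
  - by have := w_far t Ht; rewrite Hz Rabs_R0; lra.
  - have [rw_deriv rdw_deriv] := ode_reflect _ _ _ w_deriv dw_deriv.
    apply: (not_trapped_below_level _ _ _ rw_deriv rdw_deriv (- C - 1) (- c) del Hdel)
      => [x|t Ht|s Hs].
    + apply: continuity_pt_opp; apply: (continuity_pt_comp (fun s => - s) h) => //.
      exact: (continuity_pt_opp id x (continuity_pt_id x)).
    + have := w_far t Ht; have := Hsign t Ht; have := w_le t ltac:(lra).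
      by move=> ? ?; rewrite Rabs_pos_eq; lra.
    + by change (0 < - h (- s)); have := h_neg (- s) ltac:(lra); lra.
  - apply: (not_trapped_below_level _ _ _ w_deriv dw_deriv 0 c del Hdel) => // t Ht.
    have := w_far t Ht; have := Hsign t Ht; have := w_pos t ltac:(lra).
    by move=> ? ?; rewrite Rabs_left; lra.
Qed.

Lemma energy_identity t : 0 < t -> Derive w t ^ 2 = 2 * P (w t).
Proof.
  have [K HK] := energy_const.
  have K0 : K = 0 by have := energy_not_pos _ HK; have := energy_not_neg _ HK; lra.
  by move=> Ht; rewrite HK // K0; ring.
Qed.

Lemma derive_bound : exists m, forall t, 0 < t -> Rabs (Derive w t) <= m * Rabs (w t - c).
Proof.
  have [_ [_ [_ [C w_le]]]] := w_sol; have [M [HM HMb]] := potential_quadratic 0 C.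
  exists (sqrt (2 * M)) => t Ht; apply: abs_le_of_sq_le; first lra.
  rewrite energy_identity //.
  by have := HMb (w t) (conj (Rlt_le _ _ (w_pos t (Rlt_le _ _ Ht))) (w_le t (Rlt_le _ _ Ht))); lra.
Qed.

(* The case [c < w 0] is the first one for [- w], with [s |-> - h (- s)] and [s |-> P (- s)];
   the same reflection is used for uniqueness and existence below. *)
Lemma solution_cases :
  (w 0 < c /\ forall t, 0 < t -> w 0 <= w t < c /\ derivable_pt_lim w t (speed P (w t))) \/
  (w 0 = c /\ forall t, 0 <= t -> w t = c) \/
  (c < w 0 /\ forall t, 0 < t -> c < w t <= w 0 /\ derivable_pt_lim w t (- speed P (w t))).
Proof.
  have [_ [_ [_ [C w_le]]]] := w_sol; have [m dw_bound] := derive_bound.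
  have w_cont0 := w_cont 0 (Rle_refl 0).
  case: (Rtotal_order (w 0) c) => [Hlt|[Heq|Hgt]]; [left|right; left|right; right];
    split=> // t Ht.
  - have [Hr E] := increasing_profile _ _ _ w_deriv dw_deriv P c m 0 w_cont0 energy_identity
      dw_bound h_pos (fun t Ht => w_pos t (Rlt_le _ _ Ht)) Hlt t Ht.
    by split=> //; rewrite -E; apply: w_deriv.
  - exact: (level_invariant _ _ w_deriv c m w_cont0 dw_bound 0 t (Rle_refl 0) Ht Heq).
  - have [rw_deriv rdw_deriv] := ode_reflect _ _ _ w_deriv dw_deriv.
    have r_energy s : 0 < s -> (- Derive w s) ^ 2 = 2 * P (- - w s).
      by move=> Hs; rewrite Ropp_involutive -energy_identity //; ring.
    have r_bound s : 0 < s -> Rabs (- Derive w s) <= m * Rabs (- w s - - c).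
    { move=> Hs; rewrite Rabs_Ropp; have -> : - w s - - c = - (w s - c) by ring.
      by rewrite Rabs_Ropp; apply: dw_bound. }
    have r_h_pos s : - C - 1 < s < - c -> 0 < - h (- s).
      by move=> Hs; have := h_neg (- s) ltac:(lra); lra.
    have r_w_ge s : 0 < s -> - C - 1 < - w s by move=> Hs; have := w_le s ltac:(lra); lra.
    have [Hr E] := increasing_profile (fun s => - h (- s)) _ _ rw_deriv rdw_deriv
      (fun s => P (- s)) (- c) m (- C - 1) (continuity_pt_opp _ _ w_cont0) r_energy r_bound
      r_h_pos r_w_ge ltac:(lra) t Ht.
    rewrite /speed Ropp_involutive in E; split; first lra.
    by rewrite /speed -E Ropp_involutive; apply: w_deriv.
Qed.
End Solution.

Let speed_c : speed P c = 0.
Proof. by rewrite /speed P_c Rmult_0_r sqrt_0. Qed.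

Let speed_cont_nonneg x : 0 <= x -> continuity_pt (speed P) x.
Proof. by move=> Hx; apply: speed_cont; [apply: P_cont|apply: potential_nonneg]. Qed.

Lemma initial_slope_cont a : 0 <= a -> continuity_pt (initial_slope P c) a.
Proof.
  move=> Ha; case: (Rtotal_order a c) => [Hlt|[->|Hgt]].
  - apply: (continuity_pt_locally_ext (speed P) _ (c - a)) (speed_cont_nonneg _ Ha); first lra.
    by move=> y /Rabs_def2 Hy; rewrite /initial_slope; case: Rlt_dec => // Hyc; lra.
  - apply/continuity_pt_eps => eps Heps.
    have [d [Hd Hb]] :=
      proj1 (continuity_pt_eps _ c) (speed_cont_nonneg _ (Rlt_le _ _ c_pos)) eps Heps.
    have slope_c : initial_slope P c c = 0.
      by rewrite /initial_slope; case: (Rlt_dec c c) => H; rewrite speed_c ?Ropp_0.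
    have slope_abs y : Rabs (initial_slope P c y) = Rabs (speed P y).
      by rewrite /initial_slope; case: (Rlt_dec y c) => H; rewrite ?Rabs_Ropp.
    exists d; split=> // y Hy; have := Hb y Hy.
    by rewrite slope_c speed_c !Rminus_0_r slope_abs.
  - have Hcont : continuity_pt (fun y => - speed P y) a.
      by apply: continuity_pt_opp; apply: speed_cont_nonneg.
    apply: (continuity_pt_locally_ext _ _ (a - c)) Hcont; first lra.
    by move=> y /Rabs_def2 Hy; rewrite /initial_slope; case: Rlt_dec => // Hyc; lra.
Qed.

Lemma initial_slope_decr a b : 0 <= a < b -> initial_slope P c b < initial_slope P c a.
Proof.
  move=> Hab; rewrite /initial_slope; case: Rlt_dec => Hb; case: Rlt_dec => Ha /=.
  - apply: sqrt_lt_1_alt; have := potential_decr _ _ Hab (Rlt_le _ _ Hb).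
    by have := potential_pos b ltac:(lra) ltac:(lra); lra.
  - lra.
  - have Hsa : 0 < speed P a.
      by apply: sqrt_lt_R0; have := potential_pos a ltac:(lra) ltac:(lra); lra.
    by have := sqrt_pos (2 * P b); rewrite /speed in Hsa *; lra.
  - apply: Ropp_lt_contravar; apply: sqrt_lt_1_alt.
    by have := potential_incr a b ltac:(lra); have := potential_nonneg a ltac:(lra); lra.
Qed.

Lemma initial_slope0_pos : 0 < initial_slope P c 0.
Proof.
  rewrite /initial_slope; case: Rlt_dec => /= // _; apply: sqrt_lt_R0.
  by have := potential_pos 0 (Rle_refl 0) ltac:(lra); lra.
Qed.

Lemma initial_slope_neg a : c < a -> initial_slope P c a < 0.
Proof.
  move=> Ha; rewrite /initial_slope; case: Rlt_dec => /= [|_]; first lra.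
  suff : 0 < speed P a by lra.
  by apply: sqrt_lt_R0; have := potential_pos a ltac:(lra) ltac:(lra); lra.
Qed.

Lemma solution_slope w : bounded_positive_solution h w ->
  forall t, 0 < t -> derivable_pt_lim w t (initial_slope P c (w t)).
Proof.
  move=> Hw t Ht; rewrite /initial_slope.
  case: (solution_cases _ Hw) => [[_ B]|[[_ B]|[_ B]]].
  - by have [Hr D] := B t Ht; case: Rlt_dec => /= H; [|lra].
  - rewrite B; last lra; case: Rlt_dec => /= [|_]; first lra.
    rewrite speed_c Ropp_0.
    apply: (derivable_pt_lim_ext_loc (fun _ => c) w t 0 t Ht) (derivable_pt_lim_const c t).
    by move=> y /Rabs_def2 Hy; rewrite B; lra.
  - by have [Hr D] := B t Ht; case: Rlt_dec => /= H; [lra|].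
Qed.

Lemma solution_right_deriv w : bounded_positive_solution h w ->
  right_deriv w 0 (initial_slope P c (w 0)).
Proof.
  move=> Hw; have [_ [w_cont [w_pos _]]] := Hw.
  apply: right_deriv_of_ode.
  - exact: w_cont (Rle_refl 0).
  - exact: solution_slope.
  - by apply: initial_slope_cont; have := w_pos 0 (Rle_refl 0); lra.
Qed.

Lemma potential_bounds_below a : 0 < a < c -> exists M, 0 < M /\
  (forall s, a <= s < c -> 0 < P s) /\ (forall s, a <= s <= c -> P s <= M * (s - c) ^ 2).
Proof.
  move=> Ha; have [M [HM Hquad]] := potential_quadratic a c; exists M; split=> //; split=> // s Hs.
  by apply: potential_pos; lra.
Qed.

Lemma potential_bounds_above a : c < a -> exists M, 0 < M /\
  (forall s, - a <= s < - c -> 0 < P (- s)) /\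
  (forall s, - a <= s <= - c -> P (- s) <= M * (s - - c) ^ 2).
Proof.
  move=> Ha; have [M [HM Hquad]] := potential_quadratic c a; exists M; split=> //; split=> s Hs.
  - by apply: potential_pos; lra.
  - by have := Hquad (- s) ltac:(lra); have -> : (- s - c) ^ 2 = (s - - c) ^ 2 by ring.
Qed.

Let P_reflect_deriv x : derivable_pt_lim (fun s => P (- s)) x (- (fun s => - h (- s)) x).
Proof. exact: derivable_pt_lim_reflect (P_deriv (- x)). Qed.

Let reflect_first_order w : (forall t, 0 < t -> derivable_pt_lim w t (- speed P (w t))) ->
  forall t, 0 < t -> derivable_pt_lim (fun t => - w t) t (speed (fun s => P (- s)) (- w t)).
Proof.
  move=> Hd t Ht; rewrite /speed Ropp_involutive.
  by have := derivable_pt_lim_opp _ _ _ (Hd t Ht); rewrite Ropp_involutive.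
Qed.

Let range_from_pos (w : R -> R) lo hi : lo <= w 0 < hi ->
  (forall t, 0 < t -> lo <= w t < hi) -> forall t, 0 <= t -> lo <= w t < hi.
Proof. by move=> H0 Hpos t /Rle_lt_or_eq_dec [/Hpos|<-]. Qed.

Lemma solution_unique w1 w2 : bounded_positive_solution h w1 ->
  bounded_positive_solution h w2 -> w1 0 = w2 0 -> forall t, 0 <= t -> w1 t = w2 t.
Proof.
  move=> H1 H2 E t Ht; have [_ [c1 [p1 _]]] := H1; have [_ [c2 _]] := H2.
  case: (solution_cases _ H1) => [[A1 B1]|[[A1 B1]|[A1 B1]]];
  case: (solution_cases _ H2) => [[A2 B2]|[[A2 B2]|[A2 B2]]]; try lra.
  - have [M [HM [Hpos Hquad]]] := potential_bounds_below (w1 0) (conj (p1 0 (Rle_refl 0)) A1).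
    apply: (first_order_unique h P (w1 0) c M A1 P_deriv Hpos HM Hquad w1 w2 c1 c2
      (fun s Hs => proj2 (B1 s Hs)) (fun s Hs => proj2 (B2 s Hs)) erefl (esym E)) => //.
    + apply: range_from_pos; [lra|move=> s Hs; have := B1 s Hs; lra].
    + apply: range_from_pos; [lra|move=> s Hs; have := B2 s Hs; lra].
  - by rewrite B1 // B2.
  - have [M [HM [Hpos Hquad]]] := potential_bounds_above (w1 0) A1.
    suff : - w1 t = - w2 t by lra.
    apply: (first_order_unique (fun s => - h (- s)) (fun s => P (- s)) (- w1 0) (- c) M
      ltac:(lra) P_reflect_deriv Hpos HM Hquad (fun t => - w1 t) (fun t => - w2 t)
      (fun s Hs => continuity_pt_opp _ _ (c1 s Hs)) (fun s Hs => continuity_pt_opp _ _ (c2 s Hs))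
      (reflect_first_order _ (fun s Hs => proj2 (B1 s Hs)))
      (reflect_first_order _ (fun s Hs => proj2 (B2 s Hs))) erefl) => //.
    + by rewrite E.
    + apply: range_from_pos; [lra|move=> s Hs; have := B1 s Hs; lra].
    + apply: range_from_pos; [lra|move=> s Hs; have := B2 s Hs; lra].
Qed.

Lemma solution_exists a : 0 < a -> exists w, bounded_positive_solution h w /\ w 0 = a.
Proof.
  move=> Ha; case: (Rtotal_order a c) => [Hlt|[->|Hgt]].
  - have [M [HM [Hpos Hquad]]] := potential_bounds_below a (conj Ha Hlt).
    exists (flow h P a c M Hlt P_deriv Hpos HM Hquad); split; last exact: flow_0.
    split; [|split; [|split]].
    + by move=> t Ht; apply: flow_second_deriv.
    + by move=> t _; apply: flow_cont.
    + by move=> t Ht; have := flow_range h P a c M Hlt P_deriv Hpos HM Hquad t Ht; lra.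
    + by exists c => t Ht; have := flow_range h P a c M Hlt P_deriv Hpos HM Hquad t Ht; lra.
  - exists (fun _ => c); split=> //; split; [|split; [|split]].
    + by move=> t _; rewrite h_c Ropp_0; apply: second_deriv_const.
    + by move=> t _; apply: continuity_pt_cst.
    + by move=> t _.
    + by exists c => t _; lra.
  - have [M [HM [Hpos Hquad]]] := potential_bounds_above a Hgt.
    have Hlt : - a < - c by lra.
    pose flow_r := flow (fun s => - h (- s)) (fun s => P (- s)) (- a) (- c) M Hlt P_reflect_deriv
      Hpos HM Hquad.
    exists (fun t => - flow_r t); split; last by rewrite /flow_r flow_0 Ropp_involutive.
    split; [|split; [|split]].
    + move=> t Ht; have := second_deriv_opp _ _ _ (flow_second_deriv (fun s => - h (- s))
        (fun s => P (- s)) (- a) (- c) M Hlt P_reflect_deriv Hpos HM Hquad t Ht).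
      by rewrite /= Ropp_involutive.
    + by move=> t _; apply: continuity_pt_opp; apply: flow_cont.
    + move=> t Ht; rewrite /flow_r.
      by have := flow_range _ _ _ _ _ Hlt P_reflect_deriv Hpos HM Hquad t Ht; lra.
    + exists a => t Ht; rewrite /flow_r.
      by have := flow_range _ _ _ _ _ Hlt P_reflect_deriv Hpos HM Hquad t Ht; lra.
Qed.
End Profile.

(** * The exchange conditions at the interface *)

Section BoundarySystem.
Variables (Fu Fv : R -> R) (mu nu : R).
Hypothesis mu_pos : 0 < mu.
Hypothesis nu_pos : 0 < nu.
Hypothesis Fu_incr : forall x y, 0 <= x < y -> Fu x < Fu y.
Hypothesis Fv_incr : forall x y, 0 <= x < y -> Fv x < Fv y.

Definition boundary_system (u v : R) : Prop :=
  Fu u = nu * v - mu * u /\ Fv v = mu * u - nu * v.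

Let boundary_system_ordered u1 v1 u2 v2 : 0 <= u1 -> 0 <= v1 ->
  boundary_system u1 v1 -> boundary_system u2 v2 -> ~ u1 < u2.
Proof.
  move=> Hu1 Hv1 [E1 F1] [E2 F2] Hlt; have HF := Fu_incr _ _ (conj Hu1 Hlt).
  have Hv : v1 < v2 by nra.
  by have := Fv_incr _ _ (conj Hv1 Hv); lra.
Qed.

Lemma boundary_system_unique u1 v1 u2 v2 : 0 <= u1 -> 0 <= v1 -> 0 <= u2 -> 0 <= v2 ->
  boundary_system u1 v1 -> boundary_system u2 v2 -> u1 = u2 /\ v1 = v2.
Proof.
  move=> Hu1 Hv1 Hu2 Hv2 S1 S2.
  have Eu : u1 = u2.
  { case: (Rtotal_order u1 u2) => [H|[//|H]]; exfalso.
    - exact: boundary_system_ordered Hu1 Hv1 S1 S2 H.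
    - exact: boundary_system_ordered Hu2 Hv2 S2 S1 H. }
  split=> //; move: S1 S2 => [E1 _] [E2 _]; rewrite Eu in E1; nra.
Qed.

Hypothesis Fu_cont : forall u, 0 <= u -> continuity_pt Fu u.
Hypothesis Fv_cont : forall v, 0 <= v -> continuity_pt Fv v.
Hypothesis Fu0 : Fu 0 < 0.
Hypothesis Fv0 : Fv 0 < 0.
Variables (cu cv : R).
Hypothesis Fu_large : forall u, cu < u -> 0 < Fu u.
Hypothesis Fv_large : forall v, cv < v -> 0 < Fv v.

Let p u := (Fu u + mu * u) / nu.

Let p_cont u : 0 <= u -> continuity_pt p u.
Proof.
  move=> Hu; apply: continuity_pt_mult; last exact: continuity_pt_cst.
  apply: continuity_pt_plus; first exact: Fu_cont.
  by apply: continuity_pt_scal; apply: continuity_pt_id.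
Qed.

Let p_incr x y : 0 <= x < y -> p x < p y.
Proof.
  move=> Hxy; have := Fu_incr _ _ Hxy; rewrite /p /Rdiv => H.
  by apply: Rmult_lt_compat_r; [apply: Rinv_0_lt_compat|nra].
Qed.

(* Eliminating [v = p u] leaves the scalar equation [Fu u + Fv (p u) = 0], whose left-hand
   side is negative at the zero of [p] and positive for large [u]. *)
Lemma boundary_system_exists : exists u v, 0 < u /\ 0 < v /\ boundary_system u v.
Proof.
  have p0 : p 0 < 0 by rewrite /p Rmult_0_r Rplus_0_r; apply: Rdiv_neg_pos.
  have [u1 [Hcu1 [Hu1 Hmu1]]] : exists u1, cu < u1 /\ 0 < u1 /\ nu * Rmax cv 0 < mu * u1.
  { have := Rmax_l cu 0; have := Rmax_r cu 0; have := Rmax_r cv 0 => Hcv Hcu0 Hcu.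
    have Hq : 0 <= nu * Rmax cv 0 / mu.
      by apply: Rmult_le_pos; [nra|apply: Rlt_le; apply: Rinv_0_lt_compat].
    exists (Rmax cu 0 + nu * Rmax cv 0 / mu + 1); split; [lra|split; [lra|]].
    have -> : mu * (Rmax cu 0 + nu * Rmax cv 0 / mu + 1) =
      mu * (Rmax cu 0 + 1) + nu * Rmax cv 0 by field; lra.
    nra. }
  have Fu1 := Fu_large u1 Hcu1.
  have pu1 : Rmax cv 0 < p u1.
  { rewrite /p; apply: (Rmult_lt_reg_r nu) => //.
    have -> : (Fu u1 + mu * u1) / nu * nu = Fu u1 + mu * u1 by field; lra.
    nra. }
  have [us [Hus Eus]] := IVT_root p 0 u1 (Rlt_le _ _ Hu1)
    (fun z Hz => p_cont z (proj1 Hz)) ltac:(have := Rmax_r cv 0; nra).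
  have Fus : Fu us = - mu * us.
    by move: Eus; rewrite /p /Rdiv => /Rmult_integral [|/Rinv_neq_0_compat]; lra.
  have p_nonneg u : us <= u -> 0 <= p u.
    by case/Rle_lt_or_eq_dec => [H|<-]; [have := p_incr us u ltac:(lra)|]; lra.
  have Hus_pos : 0 < us.
    by case: (Rle_lt_or_eq_dec _ _ (proj1 Hus)) => // E; rewrite -E in Eus; lra.
  have k_us : Fu us + Fv (p us) < 0 by rewrite Eus Fus; nra.
  have k_u1 : 0 < Fu u1 + Fv (p u1).
    by have := Fv_large (p u1) ltac:(have := Rmax_l cv 0; lra); lra.
  have [u0 [Hu0 Eu0]] := IVT_root (fun u => Fu u + Fv (p u)) us u1 (proj2 Hus)
    (fun z Hz => continuity_pt_plus _ _ _ (Fu_cont z ltac:(lra))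
       (continuity_pt_comp p Fv z (p_cont z ltac:(lra)) (Fv_cont _ (p_nonneg z (proj1 Hz)))))
    ltac:(rewrite /=; nra).
  have Hus0 : us < u0.
    by case: (Rle_lt_or_eq_dec _ _ (proj1 Hu0)) => // E; rewrite -E /= in Eu0; lra.
  exists u0, (p u0); split; first lra; split; first by have := p_incr us u0 ltac:(lra); lra.
  have Ep : nu * p u0 = Fu u0 + mu * u0 by rewrite /p; field; lra.
  by split; move: Eu0 => /=; lra.
Qed.
End BoundarySystem.

(** * Steady states and half-line profiles *)

Lemma big_Rplus_eq0 n (F : 'I_n -> R) :
  (forall i, F i = 0) -> \big[Rplus/0]_(i < n) F i = 0.
Proof. by move=> H; apply: (big_ind (fun x => x = 0)) => // x y -> ->; ring. Qed.

Lemma has_laplacian_profile n (phi : R -> R) (x : pt n) L :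
  second_deriv phi x.2 L -> has_laplacian (fun y : pt n => phi y.2) x L.
Proof.
  move=> H; exists (fun i => if i is Some _ then 0 else L); split.
  - by case=> [i|] //; rewrite /dir /coord /=; apply: second_deriv_const.
  - by rewrite big_Rplus_eq0 //; ring.
Qed.

Lemma second_deriv_of_has_laplacian n (U : pt n -> R) (x : pt n) L :
  (forall y', U (y', x.2) = U (x.1, x.2)) -> has_laplacian U x L ->
  second_deriv (fun t => U (x.1, t)) x.2 L.
Proof.
  move=> HU [lam [Hlam ->]].
  have lam0 i : lam (Some i) = 0.
    by apply: (second_deriv_const_eq0 _ (U (x.1, x.2)) _ _ _ (Hlam (Some i))) => t; apply: HU.
  by rewrite big_Rplus_eq0 // Rplus_0_l; apply: (Hlam None).
Qed.

Lemma bounded_positive_solution_of_half_line h phi :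
  (forall t, 0 < t -> second_deriv phi t (- h (phi t))) ->
  (forall t, 0 <= t -> forall eps, 0 < eps -> exists del, 0 < del /\
     forall s, 0 <= s -> Rabs (s - t) < del -> Rabs (phi s - phi t) < eps) ->
  (forall t, 0 <= t -> 0 < phi t) -> (exists C, forall t, 0 <= t -> phi t <= C) ->
  bounded_positive_solution h (fun t => phi (Rmax 0 t)).
Proof.
  move=> Hd Hc Hpos [C HC].
  have E t : 0 <= t -> phi (Rmax 0 t) = phi t by move=> Ht; rewrite Rmax_right.
  split; [|split; [|split]].
  - move=> t Ht; rewrite E; last lra.
    by apply: (second_deriv_ext_pos phi) (Hd t Ht) => // s Hs; rewrite E; lra.
  - move=> t Ht; apply/continuity_pt_eps => eps Heps.
    have [del [Hdel Hb]] := Hc t Ht eps Heps; exists del; split=> // s Hs.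
    rewrite (E t Ht); apply: Hb; first exact: Rmax_l.
    apply: Rle_lt_trans Hs; rewrite /Rmax; case: Rle_dec => Hs0; first lra.
    by split_Rabs; lra.
  - by move=> t Ht; rewrite E //; apply: Hpos.
  - by exists C => t Ht; rewrite E //; apply: HC.
Qed.

Lemma lower_profile_solution n D g (U : pt n -> R) x' : 0 < D ->
  (forall x : pt n, x.2 < 0 -> exists L, has_laplacian U x L /\ - D * L = g (U x)) ->
  cont_on U (@lowerH n) -> (forall x : pt n, x.2 <= 0 -> 0 < U x) ->
  (exists C, forall x : pt n, x.2 <= 0 -> Rabs (U x) <= C) ->
  (forall (x' y' : 'I_n -> R) t, t <= 0 -> U (x', t) = U (y', t)) ->
  bounded_positive_solution (fun s => g s / D) (fun t => U (x', - Rmax 0 t)).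
Proof.
  move=> HD SU CU PU [C HC] TU.
  apply: (bounded_positive_solution_of_half_line _ (fun t => U (x', - t))).
  - move=> t Ht; have [L [HL EL]] := SU (x', - t) ltac:(rewrite /=; lra).
    have -> : - (g (U (x', - t)) / D) = L by rewrite -EL; field; lra.
    apply: (second_deriv_reflect (fun s => U (x', s))).
    apply: (second_deriv_of_has_laplacian _ U (x', - t)) HL.
    by move=> y'; apply: TU; rewrite /=; lra.
  - move=> t Ht eps Heps.
    have [del [Hdel Hb]] := CU (x', - t) ltac:(rewrite /lowerH /=; lra) eps Heps.
    exists del; split=> // s Hs Hst; apply: (Hb (x', - s)); rewrite /lowerH /=.
    + lra.
    + by move=> i; rewrite Rminus_diag Rabs_R0.
    + by rewrite -Rabs_Ropp; have -> : - (- s - - t) = s - t by ring.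
  - by move=> t Ht; apply: PU; rewrite /=; lra.
  - exists C => t Ht; have := HC (x', - t) ltac:(rewrite /=; lra).
    by have := Rle_abs (U (x', - t)); lra.
Qed.

Lemma upper_profile_solution n d f (V : pt n -> R) x' : 0 < d ->
  (forall x : pt n, 0 < x.2 -> exists L, has_laplacian V x L /\ - d * L = f (V x)) ->
  cont_on V (@upperH n) -> (forall x : pt n, 0 <= x.2 -> 0 < V x) ->
  (exists C, forall x : pt n, 0 <= x.2 -> Rabs (V x) <= C) ->
  (forall (x' y' : 'I_n -> R) t, 0 <= t -> V (x', t) = V (y', t)) ->
  bounded_positive_solution (fun s => f s / d) (fun t => V (x', Rmax 0 t)).
Proof.
  move=> Hd SV CV PV [C HC] TV.
  apply: (bounded_positive_solution_of_half_line _ (fun t => V (x', t))).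
  - move=> t Ht; have [L [HL EL]] := SV (x', t) Ht.
    have -> : - (f (V (x', t)) / d) = L by rewrite -EL; field; lra.
    apply: (second_deriv_of_has_laplacian _ V (x', t)) HL.
    by move=> y'; apply: TV; rewrite /=; lra.
  - move=> t Ht eps Heps; have [del [Hdel Hb]] := CV (x', t) Ht eps Heps.
    exists del; split=> // s Hs Hst; apply: (Hb (x', s)) => // i.
    by rewrite Rminus_diag Rabs_R0.
  - by move=> t Ht; apply: PV.
  - by exists C => t Ht; have := HC (x', t) Ht; have := Rle_abs (V (x', t)); lra.
Qed.

(* [wu t] is the steady state at depth [t] below the interface, [wv t] at height [t] above it. *)
Definition half_line_profiles (D d mu nu : R) (hu hv wu wv : R -> R) : Prop :=
  exists a b, bounded_positive_solution hu wu /\ bounded_positive_solution hv wv /\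
    right_deriv wu 0 a /\ right_deriv wv 0 b /\
    D * - a = nu * wv 0 - mu * wu 0 /\ - d * b = mu * wu 0 - nu * wv 0.

Lemma steady_state_of_profiles n D d mu nu g f wu wv : 0 < D -> 0 < d ->
  half_line_profiles D d mu nu (fun s => g s / D) (fun s => f s / d) wu wv ->
  steady_state D d mu nu g f (fun x : pt n => wu (- x.2)) (fun x : pt n => wv x.2) /\
  positive_bounded (fun x : pt n => wu (- x.2)) (fun x : pt n => wv x.2).
Proof.
  move=> HD Hd [a [b [[Su [Cu [Pu [Bu HBu]]]] [[Sv [Cv [Pv [Bv HBv]]]] [Ra [Rb [Ea Eb]]]]]]].
  split; [split; [|split; [|split; [|split]]]|split; [|split; [|split]]].
  - move=> x Hx; exists (- (g (wu (- x.2)) / D)); split; last by field; lra.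
    apply: (has_laplacian_profile _ (fun t => wu (- t))).
    by apply: second_deriv_reflect; apply: Su; lra.
  - move=> x Hx; exists (- (f (wv x.2) / d)); split; last by field; lra.
    by apply: (has_laplacian_profile _ wv); apply: Sv.
  - move=> x Hx eps Heps; rewrite /lowerH in Hx.
    have [del [Hdel Hb]] := proj1 (continuity_pt_eps _ _) (Cu (- x.2) ltac:(lra)) eps Heps.
    exists del; split=> // z _ _ Hz; apply: Hb.
    by rewrite -Rabs_Ropp; have -> : - (- z.2 - - x.2) = z.2 - x.2 by ring.
  - move=> x Hx eps Heps.
    have [del [Hdel Hb]] := proj1 (continuity_pt_eps _ _) (Cv x.2 Hx) eps Heps.
    by exists del; split=> // z _ _ Hz; apply: Hb.
  - move=> x'; exists (- a), b; split; first exact: left_deriv_reflect.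
    by split=> //; rewrite /= Ropp_0.
  - by move=> x Hx; apply: Pu; rewrite /=; lra.
  - by move=> x Hx; apply: Pv.
  - exists Bu => x Hx; have := Pu (- x.2) ltac:(lra); have := HBu (- x.2) ltac:(lra).
    by move=> ? ?; rewrite Rabs_pos_eq; lra.
  - exists Bv => x Hx; have := Pv x.2 Hx; have := HBv x.2 Hx.
    by move=> ? ?; rewrite Rabs_pos_eq; lra.
Qed.

Lemma profiles_of_steady_state n D d mu nu g f (U V : pt n -> R) : 0 < D -> 0 < d ->
  steady_state D d mu nu g f U V -> positive_bounded U V -> tangential_indep U V ->
  exists wu wv, half_line_profiles D d mu nu (fun s => g s / D) (fun s => f s / d) wu wv /\
    (forall x : pt n, x.2 <= 0 -> U x = wu (- x.2)) /\ (forall x : pt n, 0 <= x.2 -> V x = wv x.2).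
Proof.
  move=> HD Hd [SU [SV [CU [CV BC]]]] [PU [PV [BU BV]]] [TU TV].
  pose x0 : 'I_n -> R := fun _ => 0.
  have [a [b [La [Rb [Ea Eb]]]]] := BC x0.
  have Rmax0_nonneg t : 0 <= t -> Rmax 0 t = t by move=> Ht; rewrite Rmax_right.
  exists (fun t => U (x0, - Rmax 0 t)), (fun t => V (x0, Rmax 0 t)).
  split; [exists (- a), b|split].
  - split; first exact: lower_profile_solution.
    split; first exact: upper_profile_solution.
    split.
    { apply: (right_deriv_ext (fun t => U (x0, - t))).
        by move=> t Ht; rewrite Rmax0_nonneg.
      exact: (right_deriv_reflect (fun t => U (x0, t))). }
    split.
    { by apply: (right_deriv_ext (fun t => V (x0, t))) Rb => t Ht; rewrite Rmax0_nonneg. }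
    rewrite Rmax0_nonneg ?Ropp_0; last lra.
    by split; first rewrite Ropp_involutive.
  - move=> [x' t] /= Ht; rewrite Rmax0_nonneg; last lra.
    by rewrite Ropp_involutive; apply: TU.
  - by move=> [x' t] /= Ht; rewrite Rmax0_nonneg //; apply: TV.
Qed.

Lemma loc_lipschitz_div h D : 0 < D -> loc_lipschitz h -> loc_lipschitz (fun s => h s / D).
Proof.
  move=> HD Hh a b; have [L HL] := Hh a b; exists (L / D) => s t Hs Ht.
  have -> : h s / D - h t / D = (h s - h t) / D by field; lra.
  rewrite Rabs_div ?(Rabs_pos_eq D); try lra.
  have -> : L / D * Rabs (s - t) = L * Rabs (s - t) / D by field; lra.
  by apply: Rmult_le_compat_r; [apply: Rlt_le; apply: Rinv_0_lt_compat|apply: HL].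
Qed.

Lemma kpp_potential_scaled h D c : 0 < D -> 0 < c -> loc_lipschitz h -> h c = 0 ->
  (forall s, 0 < s < c -> 0 < h s) -> (forall s, c < s -> h s < 0) ->
  kpp_potential (fun s => h s / D) (fun s => RInt (fun x => h x / D) s c) c.
Proof.
  move=> HD Hc Hlip Hroot Hpos Hneg.
  have Hlip' := loc_lipschitz_div _ _ HD Hlip.
  split=> // [|s Hs|s Hs|x|].
  - by rewrite Hroot /Rdiv Rmult_0_l.
  - by apply: Rdiv_lt_0_compat; [apply: Hpos|].
  - by apply: Rdiv_neg_pos; [apply: Hneg|].
  - by apply: RInt_lower_deriv; apply: loc_lipschitz_continuity_pt.
  - exact: RInt_point.
Qed.

Section BoundaryFlux.
Variables (h P : R -> R) (c D : R).
Hypothesis hP : kpp_potential h P c.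
Hypothesis D_pos : 0 < D.

Lemma flux_incr x y : 0 <= x < y -> D * - initial_slope P c x < D * - initial_slope P c y.
Proof. by move=> Hxy; have := initial_slope_decr _ _ _ hP _ _ Hxy; nra. Qed.

Lemma flux_cont u : 0 <= u -> continuity_pt (fun u => D * - initial_slope P c u) u.
Proof.
  move=> Hu; apply: continuity_pt_scal; apply: continuity_pt_opp.
  exact: initial_slope_cont hP _ Hu.
Qed.

Lemma flux0_neg : D * - initial_slope P c 0 < 0.
Proof. by have := initial_slope0_pos _ _ _ hP; nra. Qed.

Lemma flux_large u : c < u -> 0 < D * - initial_slope P c u.
Proof. by move=> Hu; have := initial_slope_neg _ _ _ hP _ Hu; nra. Qed.
End BoundaryFlux.

Section HalfLineProfiles.
Variables (hu Pu hv Pv : R -> R) (cu cv D d mu nu : R).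
Hypothesis Hu : kpp_potential hu Pu cu.
Hypothesis Hv : kpp_potential hv Pv cv.
Hypotheses (HD : 0 < D) (Hd : 0 < d) (Hmu : 0 < mu) (Hnu : 0 < nu).

Lemma half_line_profiles_exist : exists wu wv, half_line_profiles D d mu nu hu hv wu wv.
Proof.
  have [u0 [v0 [Hu0 [Hv0 [Eu Ev]]]]] := boundary_system_exists _ _ mu nu Hmu Hnu
    (flux_incr _ _ _ _ Hu HD) (flux_cont _ _ _ _ Hu) (flux_cont _ _ _ _ Hv)
    (flux0_neg _ _ _ _ Hu HD) (flux0_neg _ _ _ _ Hv Hd) cu cv
    (flux_large _ _ _ _ Hu HD) (flux_large _ _ _ _ Hv Hd).
  have [wu [Su Wu0]] := solution_exists _ _ _ Hu u0 Hu0.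
  have [wv [Sv Wv0]] := solution_exists _ _ _ Hv v0 Hv0.
  exists wu, wv, (initial_slope Pu cu (wu 0)), (initial_slope Pv cv (wv 0)).
  split=> //; split=> //; split; first exact: (solution_right_deriv _ _ _ Hu _ Su).
  split; first exact: (solution_right_deriv _ _ _ Hv _ Sv).
  by rewrite Wu0 Wv0; split=> //; rewrite -Ev; ring.
Qed.

Lemma half_line_profiles_unique wu1 wv1 wu2 wv2 :
  half_line_profiles D d mu nu hu hv wu1 wv1 -> half_line_profiles D d mu nu hu hv wu2 wv2 ->
  (forall t, 0 <= t -> wu1 t = wu2 t) /\ (forall t, 0 <= t -> wv1 t = wv2 t).
Proof.
  have slopes wu wv : half_line_profiles D d mu nu hu hv wu wv ->
    boundary_system (fun u => D * - initial_slope Pu cu u) (fun v => d * - initial_slope Pv cv v)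
      mu nu (wu 0) (wv 0).
  { move=> [a [b [Su [Sv [Ra [Rb [Ea Eb]]]]]]].
    rewrite (right_deriv_unique _ _ _ _ Ra (solution_right_deriv _ _ _ Hu _ Su)) in Ea.
    rewrite (right_deriv_unique _ _ _ _ Rb (solution_right_deriv _ _ _ Hv _ Sv)) in Eb.
    by split=> //; rewrite -Eb; ring. }
  move=> H1 H2; have B1 := slopes _ _ H1; have B2 := slopes _ _ H2.
  move: H1 H2 => [_ [_ [S1u [S1v _]]]] [_ [_ [S2u [S2v _]]]].
  have pos0 h w : bounded_positive_solution h w -> 0 <= w 0.
    by move=> [_ [_ [Hpos _]]]; apply: Rlt_le; apply: Hpos; lra.
  have [E0u E0v] := boundary_system_unique _ _ mu nu Hmu Hnu
    (flux_incr _ _ _ _ Hu HD) (flux_incr _ _ _ _ Hv Hd) _ _ _ _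
    (pos0 _ _ S1u) (pos0 _ _ S1v) (pos0 _ _ S2u) (pos0 _ _ S2v) B1 B2.
  split; first exact: (solution_unique _ _ _ Hu _ _ S1u S2u).
  exact: (solution_unique _ _ _ Hv _ _ S1v S2v).
Qed.
End HalfLineProfiles.

Theorem proposition2p2 (N : nat) (D d mu nu : R) (g f : R -> R) :
  (2 <= N)%nat -> 0 < D -> 0 < d -> 0 < mu -> 0 < nu ->
  KPP_g g -> KPP_f f ->
  exists U V : pt N.-1 -> R,
    (steady_state D d mu nu g f U V /\ positive_bounded U V /\
     tangential_indep U V) /\
    forall U' V' : pt N.-1 -> R,
      steady_state D d mu nu g f U' V' -> positive_bounded U' V' ->
      tangential_indep U' V' ->
      (forall x : pt N.-1, x.2 <= 0 -> U' x = U x) /\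
      (forall x : pt N.-1, 0 <= x.2 -> V' x = V x).
Proof.
  move=> _ HD Hd Hmu Hnu [g_lip [g0 [_ [_ [g1 [g_pos g_neg]]]]]]
    [S [HS [f_lip [f0 [_ [_ [fS [f_pos f_neg]]]]]]]].
  have Hu := kpp_potential_scaled g D 1 HD Rlt_0_1 g_lip g1 (fun s Hs => proj1 (g_pos s Hs)) g_neg.
  have Hv := kpp_potential_scaled f d S Hd HS f_lip fS (fun s Hs => proj1 (f_pos s Hs)) f_neg.
  have [wu [wv Hw]] := half_line_profiles_exist _ _ _ _ _ _ D d mu nu Hu Hv HD Hd Hmu Hnu.
  have [Hss Hpb] := steady_state_of_profiles N.-1 D d mu nu g f wu wv HD Hd Hw.
  exists (fun x => wu (- x.2)), (fun x => wv x.2); split; first by do 2 split=> //.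
  move=> U' V' Hss' Hpb' Hti'.
  have [w1 [w2 [Hw' [HU HV]]]] := profiles_of_steady_state _ _ _ _ _ _ _ _ _ HD Hd Hss' Hpb' Hti'.
  have [E1 E2] :=
    half_line_profiles_unique _ _ _ _ _ _ D d mu nu Hu Hv HD Hd Hmu Hnu _ _ _ _ Hw' Hw.
  by split=> x Hx; [rewrite HU // E1 //; lra|rewrite HV // E2].
Qed.
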